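(* Let $\gamma>0$ and assume the Hamiltonians satisfy (H) and $\min_{\mathbb R}H_\alpha=H_\alpha(0)$ for every $\alpha$. Then there exists a vertex test function $G:J^2\to\mathbb R$ associated with the parameter $\gamma$ and the flux limiter $A=A_0+\gamma$ (i.e. satisfying (i)-(vi) below) which moreover, for every $K>0$, is $C^{1,1}$ on $J_K^2=\{(x,y)\in J^2:d(x,y)\le K\}$ (on each piece $(J_\alpha\times J_\beta)\cap J_K^2$) with $$\|D^2G\|_{L^\infty(J_K^2)}\le\frac{C_K}{\gamma},$$ where $C_K$ depends only on $K$ and the Hamiltonians. Vertex test function properties: (i) $G\in C(J^2)$, $G(x,\cdot)\in C^1(J)$ and $G(\cdot,y)\in C^1(J)$ for all $x,y$; (ii) $G\ge0=G(0,0)$; (iii) $0\le G(x,x)\le\gamma$ for all $x\in J$; (iv) $\mathbf H(y,-G_y(x,y))-\mathbf H(x,G_x(x,y))\le\gamma$ for all $(x,y)\in J^2$; (v) there is a non-decreasing $g:[0,\infty)\to\mathbb R$ with $g(d(x,y))\le G(x,y)$ and $g(a)/a\to+\infty$ as $a\to+\infty$; (vi) for every $K\ge0$ there is $C_K'$ with $|G_x(x,y)|+|G_y(x,y)|\le C_K'$ whenever $d(x,y)\le K$.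
   Context: Junction: $N\ge1$, $J=\bigcup_{\alpha=1}^NJ_\alpha$, $N$ copies of $[0,\infty)$ glued at $0$; points of $J_\alpha$ identified with their coordinate; $d(x,y)=|x-y|$ on the same branch, $|x|+|y|$ otherwise. A function on $J$ is $C^1(J)$ if it is continuous and $C^1$ on each branch (one-sided at $0$); its gradient is the branch derivative off $0$ and the vector $(\partial_1,\dots,\partial_N)$ of branch derivatives at $0$. $G_x,G_y$ denote these gradients in the first/second variable. Hamiltonians (H): $H_\alpha:\mathbb R\to\mathbb R$ Lipschitz continuous, coercive, quasi-convex (sublevel sets convex). $H_\alpha^-(p)=H_\alpha(\min(p,0))$, $H_\alpha^+(p)=H_\alpha(\max(p,0))$ (since $0$ is a minimum point). $A_0=\max_\alpha\min_{\mathbb R}H_\alpha$. $F_A(p)=\max(A,\max_\alpha H_\alpha^-(p_\alpha))$. Shorthand: $\mathbf H(x,p)=H_\alpha(p)$ for $x\in J_\alpha\setminus\{0\}$, $\mathbf H(0,p)=F_A(p)$ for $p\in\mathbb R^N$, with $A=A_0+\gamma$. *)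

From Stdlib Require Import Reals Lra Lia.
Open Scope R_scope.

(* Junction J with N branches: a point is a pair (a, x) with a < N a branch
   index and x >= 0 its coordinate; all pairs (a, 0) denote the vertex 0.
   A function on J is a function f : nat -> R -> R (branch, coordinate). *)

Definition inJ (N : nat) (a : nat) (x : R) : Prop := (a < N)%nat /\ 0 <= x.

Definition dJ (a : nat) (x : R) (b : nat) (y : R) : R :=
  if Nat.eq_dec a b then Rabs (x - y) else x + y.

Fixpoint maxf (f : nat -> R) (n : nat) : R :=
  match n with
  | O => f O
  | S k => Rmax (maxf f k) (f (S k))
  end.

Definition maxJ (N : nat) (f : nat -> R) : R := maxf f (N - 1)%nat.

Definition Hminus (Ha : R -> R) (p : R) : R := Ha (Rmin p 0).
Definition Hplus (Ha : R -> R) (p : R) : R := Ha (Rmax p 0).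

Definition lipschitz (h : R -> R) : Prop :=
  exists L, forall p q, Rabs (h p - h q) <= L * Rabs (p - q).
Definition coercive (h : R -> R) : Prop :=
  forall M, exists R0, forall p, R0 <= Rabs p -> M <= h p.
Definition quasi_convex (h : R -> R) : Prop :=
  forall p q t, 0 <= t <= 1 -> h (t * p + (1 - t) * q) <= Rmax (h p) (h q).

(* A_0 = max_a min_R H_a; under the hypothesis min_R H_a = H_a(0) this is: *)
Definition A0 (N : nat) (H : nat -> R -> R) : R := maxJ N (fun a => H a 0).

Definition FA (N : nat) (H : nat -> R -> R) (A : R) (p : nat -> R) : R :=
  Rmax A (maxJ N (fun a => Hminus (H a) (p a))).

(* bold H at the point (a, x): H_a(p_a) off the vertex, F_A(p) at the vertex.
   p is the vector of branch derivatives (only p a is used off the vertex). *)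
Definition Hbold (N : nat) (H : nat -> R -> R) (A : R) (a : nat) (x : R)
  (p : nat -> R) : R :=
  if Req_EM_T x 0 then FA N H A p else H a (p a).

Definition branch_deriv (f : R -> R) (x l : R) : Prop :=
  forall eps, 0 < eps -> exists delta, 0 < delta /\
    forall h, h <> 0 -> 0 <= x + h -> Rabs h < delta ->
      Rabs ((f (x + h) - f x) / h - l) < eps.

Definition cont_half (f : R -> R) : Prop :=
  forall x, 0 <= x -> forall eps, 0 < eps -> exists delta, 0 < delta /\
    forall x', 0 <= x' -> Rabs (x' - x) < delta -> Rabs (f x' - f x) < eps.

Definition cont_J2 (N : nat) (G : nat -> R -> nat -> R -> R) : Prop :=
  forall a x b y, inJ N a x -> inJ N b y ->
  forall eps, 0 < eps -> exists delta, 0 < delta /\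
    forall a' x' b' y', inJ N a' x' -> inJ N b' y' ->
      dJ a x a' x' < delta -> dJ b y b' y' < delta ->
      Rabs (G a' x' b' y' - G a x b y) < eps.

From Stdlib Require Import Reals Lra Lia Psatz ZArith ClassicalEpsilon.
Open Scope R_scope.

(* On one branch the test function is [F (x - y) - bump y]; across two branches it is
   [stair_primitive (x + y) + x * slope (x + y)], where [stair_primitive] is a superlinear
   [C^{1,1}] function whose derivative [stair] climbs by one unit on each interval
   [[dk k, dk k + 1]], [slope d = p + ln (1 + d)], and [F] glues [stair_primitive (- s)], a
   parabola of height [p w / 2] near [0], and [p w / 2 + stair_primitive s + s * slope s].
   Off the vertex the Hamiltonian inequality follows on one branch from the monotonicity of each
   [H a] on [[0, oo)], and across branches from
   [H b (- G_y) <= A0 + L (stair + 1) <= H a slope <= H a (G_x)], which holds once [p] and the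
   nodes [dk] are chosen from the coercivity of the Hamiltonians; at the vertex the flux limiter
   [A0 + gamma] absorbs what is left.  Rescaling to [lam G (x / lam, y / lam)] with
   [lam = max 1 gamma] and [w = gamma / (lam p)] makes the bump cost at most [gamma] on the
   diagonal and the second derivatives [O (1 / lam + p^2 / gamma)]. *)

Lemma derivable_pt_lim_value f x l l' :
  derivable_pt_lim f x l -> l = l' -> derivable_pt_lim f x l'.
Proof. intros D <-; exact D. Qed.

Lemma derivable_pt_lim_affine a b t : derivable_pt_lim (fun s => a + s * b) t b.
Proof.
  apply (derivable_pt_lim_value _ _ _ _ (derivable_pt_lim_plus _ _ t _ _ (derivable_pt_lim_const a t)
    (derivable_pt_lim_mult _ _ t _ _ (derivable_pt_lim_id t) (derivable_pt_lim_const b t)))).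
  unfold fct_cte, id; ring.
Qed.

Lemma derivable_pt_lim_comp_affine f a b t l :
  derivable_pt_lim f (a + t * b) l -> derivable_pt_lim (fun s => f (a + s * b)) t (l * b).
Proof.
  intro Df. exact (derivable_pt_lim_comp _ f t b l (derivable_pt_lim_affine a b t) Df).
Qed.

Lemma derivable_pt_lim_shift f c t l :
  derivable_pt_lim f (t + c) l -> derivable_pt_lim (fun s => f (s + c)) t l.
Proof.
  intro Df. apply (derivable_pt_lim_ext (fun s => f (c + s * 1))); [intro; f_equal; ring|].
  apply (derivable_pt_lim_value _ _ (l * 1)); [|ring]. apply derivable_pt_lim_comp_affine.
  replace (c + t * 1) with (t + c) by ring. exact Df.
Qed.

Lemma derivable_pt_lim_reflect f c t l :
  derivable_pt_lim f (c - t) l -> derivable_pt_lim (fun s => f (c - s)) t (- l).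
Proof.
  intro Df. apply (derivable_pt_lim_ext (fun s => f (c + s * -1))); [intro; f_equal; ring|].
  apply (derivable_pt_lim_value _ _ (l * -1)); [|ring]. apply derivable_pt_lim_comp_affine.
  replace (c + t * -1) with (c - t) by ring. exact Df.
Qed.

Lemma derivable_pt_lim_rescale f l x d : 0 < l ->
  derivable_pt_lim f (x / l) d -> derivable_pt_lim (fun s => l * f (s / l)) x d.
Proof.
  intros Hl Df.
  apply (derivable_pt_lim_ext (fun s => l * f (0 + s * / l))); [intro; do 2 f_equal; unfold Rdiv; ring|].
  apply (derivable_pt_lim_value _ _ (l * (d * / l))); [|field; lra].
  apply (derivable_pt_lim_scal (fun s => f (0 + s * / l))), derivable_pt_lim_comp_affine.
  replace (0 + x * / l) with (x / l) by (unfold Rdiv; ring). exact Df.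
Qed.

Lemma derivable_pt_lim_sq_affine c a k t :
  derivable_pt_lim (fun s => c * ((a + s * k) * (a + s * k))) t (2 * c * k * (a + t * k)).
Proof.
  apply (derivable_pt_lim_value _ _ _ _ (derivable_pt_lim_scal _ c t _ (derivable_pt_lim_mult _ _ t _ _
    (derivable_pt_lim_affine a k t) (derivable_pt_lim_affine a k t)))).
  ring.
Qed.

Lemma derivable_pt_lim_branch f x l : derivable_pt_lim f x l -> branch_deriv f x l.
Proof.
  intros Df eps Heps. destruct (Df eps Heps) as [d Hd].
  exists d; split; [apply cond_pos|]. intros h Hh _ Hhd. apply Hd; auto.
Qed.

Definition piecewise (a : R) (g h : R -> R) (t : R) : R := if Rle_dec t a then g t else h t.

Lemma piecewise_left a g h t : t <= a -> piecewise a g h t = g t.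
Proof. unfold piecewise; destruct (Rle_dec t a); lra. Qed.
Lemma piecewise_right a g h t : a < t -> piecewise a g h t = h t.
Proof. unfold piecewise; destruct (Rle_dec t a); lra. Qed.
Lemma piecewise_right_glued a g h t : g a = h a -> a <= t -> piecewise a g h t = h t.
Proof.
  intros Ea Ht. unfold piecewise; destruct (Rle_dec t a); [|reflexivity].
  replace t with a by lra. exact Ea.
Qed.

Lemma derivable_pt_lim_piecewise a g h g' h' t :
  g a = h a -> g' a = h' a ->
  (forall s, s <= a -> derivable_pt_lim g s (g' s)) ->
  (forall s, a <= s -> derivable_pt_lim h s (h' s)) ->
  derivable_pt_lim (piecewise a g h) t (piecewise a g' h' t).
Proof.
  intros E E' Dg Dh.
  destruct (Rtotal_order t a) as [Hlt|[<-|Hgt]].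
  - rewrite piecewise_left by lra.
    apply (derivable_pt_lim_locally_ext g _ t (t - 1) a); [lra| |apply Dg; lra].
    intros z Hz. rewrite piecewise_left by lra. reflexivity.
  - rewrite piecewise_left by lra. intros eps Heps.
    destruct (Dg t (Rle_refl t) eps Heps) as [d1 H1].
    destruct (Dh t (Rle_refl t) eps Heps) as [d2 H2].
    assert (Hm : 0 < Rmin d1 d2) by (apply Rmin_pos; apply cond_pos).
    exists (mkposreal _ Hm). intros h0 Hh Hhd; simpl in Hhd.
    pose proof (Rmin_l d1 d2). pose proof (Rmin_r d1 d2).
    rewrite (piecewise_left t g h t) by lra.
    destruct (Rle_dec h0 0).
    + rewrite piecewise_left by lra. apply H1; auto; lra.
    + rewrite piecewise_right by lra. rewrite E, E'. apply H2; auto; lra.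
  - rewrite piecewise_right by lra.
    apply (derivable_pt_lim_locally_ext h _ t a (t + 1)); [lra| |apply Dh; lra].
    intros z Hz. rewrite piecewise_right by lra. reflexivity.
Qed.

Definition lipschitz_on (P : R -> Prop) (f : R -> R) (C : R) :=
  forall s t, P s -> P t -> Rabs (f s - f t) <= C * Rabs (s - t).

Lemma lipschitz_on_piecewise a g h C : g a = h a -> 0 <= C ->
  lipschitz_on (fun s => s <= a) g C -> lipschitz_on (fun s => a <= s) h C ->
  lipschitz_on (fun _ => True) (piecewise a g h) C.
Proof.
  intros E HC Lg Lh.
  assert (Across : forall s t, s <= a -> a < t ->
    Rabs (piecewise a g h s - piecewise a g h t) <= C * Rabs (s - t)).
  { intros s t Hs Ht. rewrite piecewise_left, piecewise_right by lra.
    replace (g s - h t) with ((g s - g a) + (h a - h t)) by (rewrite E; ring).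
    eapply Rle_trans; [apply Rabs_triang|].
    pose proof (Lg s a Hs (Rle_refl a)) as Ls. pose proof (Lh a t (Rle_refl a) (Rlt_le _ _ Ht)) as Lt.
    rewrite (Rabs_left1 (s - a)) in Ls by lra. rewrite (Rabs_left1 (a - t)) in Lt by lra.
    rewrite (Rabs_left1 (s - t)) by lra. nra. }
  intros s t _ _.
  destruct (Rle_dec s a), (Rle_dec t a).
  - rewrite !piecewise_left by lra. auto.
  - apply Across; lra.
  - rewrite Rabs_minus_sym, (Rabs_minus_sym s). apply Across; lra.
  - rewrite !piecewise_right by lra. apply Lh; lra.
Qed.

Lemma cont_half_of_local_lipschitz f : (forall x, 0 <= x -> exists C, 0 <= C /\
  forall x', 0 <= x' -> Rabs (f x' - f x) <= C * Rabs (x' - x)) -> cont_half f.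
Proof.
  intros Hl x Hx eps Heps. destruct (Hl x Hx) as [C [HC HCl]].
  exists (eps / (C + 1)); split; [apply Rdiv_lt_0_compat; lra|].
  intros x' Hx' Hd. eapply Rle_lt_trans; [apply HCl; auto|].
  apply Rle_lt_trans with ((C + 1) * Rabs (x' - x)); [pose proof (Rabs_pos (x' - x)); nra|].
  apply Rmult_lt_reg_r with (/ (C + 1)); [apply Rinv_0_lt_compat; lra|].
  replace ((C + 1) * Rabs (x' - x) * / (C + 1)) with (Rabs (x' - x)) by (field; lra). exact Hd.
Qed.

Definition continuous2_at (f : R -> R -> R) (x0 y0 : R) := forall eps, 0 < eps -> exists d, 0 < d /\
  forall x y, Rabs (x - x0) < d -> Rabs (y - y0) < d -> Rabs (f x y - f x0 y0) < eps.

Lemma continuous2_at_plus f g x y : continuous2_at f x y -> continuous2_at g x y ->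
  continuous2_at (fun a b => f a b + g a b) x y.
Proof.
  intros Hf Hg eps Heps.
  destruct (Hf (eps/2)) as [d1 [P1 Q1]]; [lra|]. destruct (Hg (eps/2)) as [d2 [P2 Q2]]; [lra|].
  exists (Rmin d1 d2); split; [apply Rmin_pos; auto|]. intros a b Ha Hb.
  pose proof (Rmin_l d1 d2); pose proof (Rmin_r d1 d2).
  specialize (Q1 a b ltac:(lra) ltac:(lra)). specialize (Q2 a b ltac:(lra) ltac:(lra)).
  replace (f a b + g a b - (f x y + g x y)) with ((f a b - f x y) + (g a b - g x y)) by ring.
  eapply Rle_lt_trans; [apply Rabs_triang|]. lra.
Qed.

Lemma continuous2_at_opp f x y : continuous2_at f x y -> continuous2_at (fun a b => - f a b) x y.
Proof.
  intros Hf eps Heps. destruct (Hf eps Heps) as [d [P Q]]. exists d; split; auto.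
  intros a b Ha Hb. replace (- f a b - - f x y) with (- (f a b - f x y)) by ring.
  rewrite Rabs_Ropp; auto.
Qed.

Lemma continuous2_at_mult f g x y : continuous2_at f x y -> continuous2_at g x y ->
  continuous2_at (fun a b => f a b * g a b) x y.
Proof.
  intros Hf Hg eps Heps.
  set (M := Rabs (f x y) + Rabs (g x y) + 1).
  assert (HM : 0 < M) by (unfold M; pose proof (Rabs_pos (f x y)); pose proof (Rabs_pos (g x y)); lra).
  set (e := Rmin 1 (eps / (2 * M))).
  assert (He : 0 < e) by (apply Rmin_pos; [lra| apply Rdiv_lt_0_compat; lra]).
  assert (e1 : e <= 1) by apply Rmin_l. assert (e2 : e <= eps / (2 * M)) by apply Rmin_r.
  assert (eM : e * M <= eps / 2).
  { apply Rmult_le_compat_r with (r := M) in e2; [|lra].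
    replace (eps / (2 * M) * M) with (eps / 2) in e2 by (field; lra). lra. }
  destruct (Hf e He) as [d1 [P1 Q1]]. destruct (Hg e He) as [d2 [P2 Q2]].
  exists (Rmin d1 d2); split; [apply Rmin_pos; auto|]. intros a b Ha Hb.
  pose proof (Rmin_l d1 d2); pose proof (Rmin_r d1 d2).
  specialize (Q1 a b ltac:(lra) ltac:(lra)). specialize (Q2 a b ltac:(lra) ltac:(lra)).
  replace (f a b * g a b - f x y * g x y)
    with ((f a b - f x y) * g a b + f x y * (g a b - g x y)) by ring.
  eapply Rle_lt_trans; [apply Rabs_triang|]. rewrite !Rabs_mult.
  assert (Hgab : Rabs (g a b) <= Rabs (g x y) + 1).
  { replace (g a b) with ((g a b - g x y) + g x y) by ring.
    eapply Rle_trans; [apply Rabs_triang|]. lra. }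
  pose proof (Rabs_pos (f a b - f x y)). pose proof (Rabs_pos (g a b)). pose proof (Rabs_pos (f x y)).
  assert (Rabs (f a b - f x y) * Rabs (g a b) <= e * (Rabs (g x y) + 1))
    by (apply Rmult_le_compat; lra).
  assert (Rabs (f x y) * Rabs (g a b - g x y) <= Rabs (f x y) * e)
    by (apply Rmult_le_compat_l; lra).
  unfold M in eM. nra.
Qed.

Lemma continuous2_at_fst x y : continuous2_at (fun a _ => a) x y.
Proof. intros eps Heps; exists eps; split; auto. Qed.

Lemma continuity_pt_abs f z : continuity_pt f z -> forall eps, 0 < eps ->
  exists d, 0 < d /\ forall z', Rabs (z' - z) < d -> Rabs (f z' - f z) < eps.
Proof.
  intros Hc eps Heps. destruct (Hc eps Heps) as [d [Hd Hdd]].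
  exists d; split; auto. intros z' Hz'.
  destruct (Req_dec z' z) as [->|Hne].
  - replace (f z - f z) with 0 by ring; rewrite Rabs_R0; auto.
  - apply (Hdd z'). split; [split; [exact I|auto]|exact Hz'].
Qed.

Lemma continuous2_at_comp_linear f u v x y :
  continuity_pt f (u * x + v * y) -> continuous2_at (fun a b => f (u * a + v * b)) x y.
Proof.
  intros Hf eps Heps. destruct (continuity_pt_abs _ _ Hf eps Heps) as [d [P Q]].
  set (K := Rabs u + Rabs v + 1).
  assert (HK : 0 < K) by (unfold K; pose proof (Rabs_pos u); pose proof (Rabs_pos v); lra).
  exists (d / K); split; [apply Rdiv_lt_0_compat; auto|]. intros a b Ha Hb. apply Q.
  replace (u * a + v * b - (u * x + v * y)) with (u * (a - x) + v * (b - y)) by ring.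
  eapply Rle_lt_trans; [apply Rabs_triang|]. rewrite !Rabs_mult.
  pose proof (Rabs_pos u); pose proof (Rabs_pos v).
  assert (Rabs u * Rabs (a - x) <= Rabs u * (d / K)) by (apply Rmult_le_compat_l; lra).
  assert (Rabs v * Rabs (b - y) <= Rabs v * (d / K)) by (apply Rmult_le_compat_l; lra).
  assert ((Rabs u + Rabs v) * (d / K) < d).
  { replace d with (K * (d / K)) at 2 by (field; lra).
    apply Rmult_lt_compat_r; [apply Rdiv_lt_0_compat; auto|unfold K; lra]. }
  lra.
Qed.

Lemma continuous2_at_rescale f l x y : 0 < l ->
  continuous2_at f (x / l) (y / l) -> continuous2_at (fun a b => l * f (a / l) (b / l)) x y.
Proof.
  intros Hl Hf eps Heps. destruct (Hf (eps / l)) as [d [Pd Qd]]; [apply Rdiv_lt_0_compat; auto|].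
  assert (Hdiv : forall a z, Rabs (a - z) < d * l -> Rabs (a / l - z / l) < d).
  { intros a z Ha. replace (a / l - z / l) with ((a - z) * / l) by (field; lra).
    rewrite Rabs_mult, (Rabs_right (/ l)) by (left; apply Rinv_0_lt_compat; auto).
    apply Rmult_lt_reg_r with l; auto. rewrite Rmult_assoc, Rinv_l by lra. lra. }
  exists (d * l); split; [nra|]. intros a b Ha Hb.
  specialize (Qd _ _ (Hdiv _ _ Ha) (Hdiv _ _ Hb)).
  replace (l * f (a / l) (b / l) - l * f (x / l) (y / l))
    with (l * (f (a / l) (b / l) - f (x / l) (y / l))) by ring.
  rewrite Rabs_mult, (Rabs_right l) by lra.
  apply Rmult_lt_compat_l with (r := l) in Qd; auto.
  replace (l * (eps / l)) with eps in Qd by (field; lra). exact Qd.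
Qed.

Lemma le_maxf f n k : (k <= n)%nat -> f k <= maxf f n.
Proof.
  induction n; intros Hk.
  - replace k with 0%nat by lia. simpl; lra.
  - simpl. destruct (Nat.eq_dec k (S n)) as [->|Hne].
    + apply Rmax_r.
    + eapply Rle_trans; [apply IHn; lia|apply Rmax_l].
Qed.

Lemma maxf_lub f n X : (forall k, (k <= n)%nat -> f k <= X) -> maxf f n <= X.
Proof.
  induction n; intros Hk; simpl.
  - apply Hk; lia.
  - apply Rmax_lub; [apply IHn; intros; apply Hk; lia|apply Hk; lia].
Qed.

Lemma le_maxJ N f k : (k < N)%nat -> f k <= maxJ N f.
Proof. intros; unfold maxJ; apply le_maxf; lia. Qed.

Lemma maxJ_lub N f X : (1 <= N)%nat -> (forall k, (k < N)%nat -> f k <= X) -> maxJ N f <= X.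
Proof. intros HN Hk; unfold maxJ; apply maxf_lub; intros; apply Hk; lia. Qed.

Lemma FA_ge_flux N H A p : A <= FA N H A p.
Proof. apply Rmax_l. Qed.

Lemma FA_ge_Hminus N H A p b : (b < N)%nat -> Hminus (H b) (p b) <= FA N H A p.
Proof.
  intros Hb. eapply Rle_trans; [apply (le_maxJ N (fun a => Hminus (H a) (p a)) b Hb)|apply Rmax_r].
Qed.

Lemma FA_lub N H A p X : (1 <= N)%nat -> A <= X ->
  (forall c, (c < N)%nat -> Hminus (H c) (p c) <= X) -> FA N H A p <= X.
Proof. intros; apply Rmax_lub; auto; apply maxJ_lub; auto. Qed.

Lemma Hbold_vertex N H A b p : Hbold N H A b 0 p = FA N H A p.
Proof. unfold Hbold; destruct (Req_EM_T 0 0); [reflexivity|contradiction]. Qed.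

Lemma Hbold_off_vertex N H A b y p : y <> 0 -> Hbold N H A b y p = H b (p b).
Proof. intros; unfold Hbold; destruct (Req_EM_T y 0); [contradiction|reflexivity]. Qed.

Lemma dJ_same_branch a x y : dJ a x a y = Rabs (x - y).
Proof. unfold dJ; destruct (Nat.eq_dec a a); [reflexivity|contradiction]. Qed.

Lemma dJ_other_branch a b x y : a <> b -> dJ a x b y = x + y.
Proof. intros; unfold dJ; destruct (Nat.eq_dec a b); [contradiction|reflexivity]. Qed.

Lemma dJ_rescale l a x b y : 0 < l -> dJ a (x / l) b (y / l) = dJ a x b y / l.
Proof.
  intros Hl. unfold dJ. destruct (Nat.eq_dec a b); [|field; lra].
  replace (x / l - y / l) with ((x - y) * / l) by (field; lra).
  rewrite Rabs_mult, (Rabs_right (/ l)) by (left; apply Rinv_0_lt_compat; auto). reflexivity.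
Qed.

Lemma dJ_lt_same_branch a x a' x' d : 0 <= x -> 0 <= x' -> dJ a x a' x' < d ->
  (0 < x -> d <= x) -> Rabs (x' - x) < d /\ (0 < x -> a' = a).
Proof.
  intros Hx Hx' Hd Hdx. unfold dJ in Hd. destruct (Nat.eq_dec a a') as [<-|Hne].
  - split; [rewrite Rabs_minus_sym; exact Hd|reflexivity].
  - destruct (Req_dec x 0) as [->|Hx0].
    + split; [rewrite Rminus_0_r, Rabs_right by lra; lra|intros; lra].
    + specialize (Hdx ltac:(lra)). lra.
Qed.

(* [branchwise P Q] is [P] on a pair of points of the same branch and [Q] on two distinct
   branches; the vertex belongs to every branch, so it is well defined on [J^2] only when
   [P] and [Q] agree on the axes. *)
Definition branchwise (P Q : R -> R -> R) (a : nat) (x : R) (b : nat) (y : R) : R :=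
  if Nat.eq_dec a b then P x y else Q x y.

Lemma cont_J2_branchwise N P Q :
  (forall x y, 0 <= x -> 0 <= y -> continuous2_at P x y) ->
  (forall x y, 0 <= x -> 0 <= y -> continuous2_at Q x y) ->
  (forall y, 0 <= y -> P 0 y = Q 0 y) -> (forall x, 0 <= x -> P x 0 = Q x 0) ->
  cont_J2 N (branchwise P Q).
Proof.
  intros CP CQ E1 E2 a x b y [_ Hx] [_ Hy] eps Heps.
  destruct (CP x y Hx Hy eps Heps) as [d1 [D1 K1]].
  destruct (CQ x y Hx Hy eps Heps) as [d2 [D2 K2]].
  set (rx := if Rlt_dec 0 x then x else 1).
  set (ry := if Rlt_dec 0 y then y else 1).
  assert (Hrx : 0 < rx /\ (0 < x -> rx <= x)) by (unfold rx; destruct (Rlt_dec 0 x); split; intros; lra).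
  assert (Hry : 0 < ry /\ (0 < y -> ry <= y)) by (unfold ry; destruct (Rlt_dec 0 y); split; intros; lra).
  set (d := Rmin (Rmin d1 d2) (Rmin rx ry)).
  assert (Hd : 0 < d /\ d <= d1 /\ d <= d2 /\ d <= rx /\ d <= ry).
  { unfold d. pose proof (Rmin_l (Rmin d1 d2) (Rmin rx ry)). pose proof (Rmin_r (Rmin d1 d2) (Rmin rx ry)).
    pose proof (Rmin_l d1 d2). pose proof (Rmin_r d1 d2). pose proof (Rmin_l rx ry). pose proof (Rmin_r rx ry).
    repeat split; try lra. apply Rmin_pos; apply Rmin_pos; lra. }
  exists d; split; [lra|].
  intros a' x' b' y' [_ Hx'] [_ Hy'] Dx Dy.
  destruct (dJ_lt_same_branch a x a' x' d Hx Hx' Dx) as [Ax Bx]; [intros; lra|].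
  destruct (dJ_lt_same_branch b y b' y' d Hy Hy' Dy) as [Ay By]; [intros; lra|].
  assert (KP : Rabs (P x' y' - P x y) < eps) by (apply K1; lra).
  assert (KQ : Rabs (Q x' y' - Q x y) < eps) by (apply K2; lra).
  unfold branchwise.
  destruct (Nat.eq_dec a' b'), (Nat.eq_dec a b); auto.
  - destruct (Req_dec x 0) as [->|Hx0]; [rewrite <- E1 by lra; auto|].
    destruct (Req_dec y 0) as [->|Hy0]; [rewrite <- E2 by lra; auto|].
    exfalso. pose proof (Bx ltac:(lra)); pose proof (By ltac:(lra)); subst; contradiction.
  - destruct (Req_dec x 0) as [->|Hx0]; [rewrite E1 by lra; auto|].
    destruct (Req_dec y 0) as [->|Hy0]; [rewrite E2 by lra; auto|].
    exfalso. pose proof (Bx ltac:(lra)); pose proof (By ltac:(lra)); subst; contradiction.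
Qed.

Lemma quasi_convex_nondecreasing h : quasi_convex h -> (forall p, h 0 <= h p) ->
  forall u v, 0 <= u <= v -> h u <= h v.
Proof.
  intros Hq Hmin u v [Hu Huv].
  destruct (Req_dec v 0) as [->|Hv]; [replace u with 0 by lra; lra|].
  assert (Ht : 0 <= u / v <= 1).
  { split; [apply Rmult_le_pos; [lra|left; apply Rinv_0_lt_compat; lra]|].
    apply Rmult_le_reg_r with v; [lra|]. unfold Rdiv; rewrite Rmult_assoc, Rinv_l by lra; lra. }
  pose proof (Hq v 0 (u / v) Ht) as Hconv.
  replace (u / v * v + (1 - u / v) * 0) with u in Hconv by (field; lra).
  pose proof (Hmin v). unfold Rmax in Hconv. destruct (Rle_dec (h v) (h 0)); lra.
Qed.

Lemma uniform_lipschitz (H : nat -> R -> R) n : (forall a, (a < n)%nat -> lipschitz (H a)) ->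
  exists L, 0 <= L /\ forall a, (a < n)%nat -> forall u v, Rabs (H a u - H a v) <= L * Rabs (u - v).
Proof.
  induction n as [|n IHn]; intros Hlip.
  - exists 0; split; [lra|]; intros; lia.
  - destruct IHn as [L [HL0 HL]]; [intros; apply Hlip; lia|].
    destruct (Hlip n ltac:(lia)) as [Ln HLn].
    exists (Rmax L Ln). split; [eapply Rle_trans; [apply HL0|apply Rmax_l]|].
    intros a Ha u v. pose proof (Rabs_pos (u - v)).
    destruct (Nat.eq_dec a n) as [->|Hne].
    + eapply Rle_trans; [apply HLn|]. apply Rmult_le_compat_r; auto. apply Rmax_r.
    + eapply Rle_trans; [apply HL; lia|]. apply Rmult_le_compat_r; auto. apply Rmax_l.
Qed.

Lemma uniform_coercive (H : nat -> R -> R) n : (forall a, (a < n)%nat -> coercive (H a)) ->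
  forall m, exists R0, forall a, (a < n)%nat -> forall u, R0 <= u -> m <= H a u.
Proof.
  intros Hcoer m. induction n as [|n IHn].
  - exists 0; intros; lia.
  - destruct IHn as [R1 HR1]; [intros; apply Hcoer; lia|].
    destruct (Hcoer n ltac:(lia) m) as [Rn HRn].
    exists (Rmax R1 Rn). intros a Ha u Hu. pose proof (Rmax_l R1 Rn). pose proof (Rmax_r R1 Rn).
    destruct (Nat.eq_dec a n) as [->|Hne].
    + apply HRn. pose proof (Rle_abs u). lra.
    + apply HR1; [lia|lra].
Qed.

Lemma coercivity_radius (H : nat -> R -> R) n : (forall a, (a < n)%nat -> coercive (H a)) ->
  exists Rad : R -> R, forall m a u, (a < n)%nat -> Rad m <= u -> m <= H a u.
Proof.
  intros Hcoer.
  exists (fun m => proj1_sig (constructive_indefinite_description _ (uniform_coercive H n Hcoer m))).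
  intros m a u Ha Hu.
  destruct (constructive_indefinite_description _ (uniform_coercive H n Hcoer m)) as [R0 HR0].
  exact (HR0 a Ha u Hu).
Qed.

Lemma H0_le_A0 N H a : (a < N)%nat -> H a 0 <= A0 N H.
Proof. apply (le_maxJ N (fun a => H a 0)). Qed.

Definition ramp := piecewise 0 (fun _ => 0) (piecewise 1 (fun t => t) (fun _ => 1)).
Definition ramp_primitive :=
  piecewise 0 (fun _ => 0) (piecewise 1 (fun t => t * t / 2) (fun t => t - 1/2)).

Lemma ramp_shift t c : ramp (t - c) = Rmin t (c + 1) - Rmin t c.
Proof. unfold ramp, piecewise, Rmin. repeat destruct Rle_dec; lra. Qed.
Lemma ramp_bounds t : 0 <= ramp t <= 1.
Proof. unfold ramp, piecewise. repeat destruct Rle_dec; lra. Qed.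
Lemma ramp_nonpos t : t <= 0 -> ramp t = 0.
Proof. intros; unfold ramp, piecewise. repeat destruct Rle_dec; lra. Qed.

Lemma ramp_primitive_nonpos t : t <= 0 -> ramp_primitive t = 0.
Proof. intros; unfold ramp_primitive, piecewise. repeat destruct Rle_dec; lra. Qed.
Lemma ramp_primitive_nonneg t : 0 <= ramp_primitive t.
Proof. unfold ramp_primitive, piecewise. repeat destruct Rle_dec; nra. Qed.
Lemma ramp_primitive_mono s t : s <= t -> ramp_primitive s <= ramp_primitive t.
Proof. intros; unfold ramp_primitive, piecewise. repeat destruct Rle_dec; nra. Qed.
Lemma ramp_primitive_ge t : t - 1/2 <= ramp_primitive t.
Proof. unfold ramp_primitive, piecewise. repeat destruct Rle_dec; nra. Qed.

Lemma derivable_pt_lim_ramp_primitive t : derivable_pt_lim ramp_primitive t (ramp t).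
Proof.
  apply derivable_pt_lim_piecewise; [unfold piecewise; destruct Rle_dec; lra..| |].
  - intros; apply derivable_pt_lim_const.
  - intros s _. apply derivable_pt_lim_piecewise; [lra|lra| |].
    + intros u _. apply (derivable_pt_lim_ext (fun t => / 2 * ((0 + t * 1) * (0 + t * 1))));
        [intro; unfold Rdiv; ring|].
      apply (derivable_pt_lim_value _ _ _ _ (derivable_pt_lim_sq_affine (/ 2) 0 1 u)).
      cbv beta; field.
    + intros u _. apply (derivable_pt_lim_ext (fun t => -1/2 + t * 1)); [intro; cbv beta; lra|].
      apply derivable_pt_lim_affine.
Qed.

Lemma derivable_pt_lim_sum (f f' : nat -> R -> R) n x :
  (forall k, derivable_pt_lim (f k) x (f' k x)) ->
  derivable_pt_lim (fun t => sum_f_R0 (fun k => f k t) n) x (sum_f_R0 (fun k => f' k x) n).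
Proof.
  intros Df. induction n as [|n IHn]; [apply Df|].
  exact (derivable_pt_lim_plus _ (f (S n)) x _ _ IHn (Df (S n))).
Qed.

Lemma sum_f_R0_eventually_zero f m n : (forall k, (m < k)%nat -> f k = 0) -> (m <= n)%nat ->
  sum_f_R0 f n = sum_f_R0 f m.
Proof.
  intros Hz Hmn. induction Hmn as [|n Hmn IH]; [reflexivity|].
  simpl. rewrite IH, Hz by lia. ring.
Qed.

Lemma sum_f_R0_mono_index f m n : (forall k, 0 <= f k) -> (m <= n)%nat ->
  sum_f_R0 f m <= sum_f_R0 f n.
Proof. intros Hf. induction 1 as [|n _ IH]; [lra|]. simpl. pose proof (Hf (S n)); lra. Qed.

Lemma sum_f_R0_le_count (f : nat -> R) n m :
  (forall k, f k <= 1) -> (forall k, (n <= k)%nat -> f k = 0) -> sum_f_R0 f m <= INR n.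
Proof.
  intros H1 Hz. enough (Hmin : sum_f_R0 f m <= INR (Nat.min (S m) n))
    by (eapply Rle_trans; [exact Hmin|apply le_INR; lia]).
  induction m as [|m IHm]; simpl sum_f_R0.
  - destruct n as [|n].
    + rewrite Hz by lia. simpl; lra.
    + replace (Nat.min 1 (S n)) with 1%nat by lia. pose proof (H1 0%nat). simpl; lra.
  - destruct (le_lt_dec n (S m)) as [Hle|Hlt].
    + rewrite Hz by lia. rewrite Nat.min_r by lia. rewrite Nat.min_r in IHm by lia. lra.
    + rewrite Nat.min_l in IHm by lia. rewrite Nat.min_l by lia.
      rewrite (S_INR (S m)). pose proof (H1 (S m)). lra.
Qed.

Definition nat_bound (d : R) : nat := Z.to_nat (up d).

Lemma nat_bound_ge d : d <= INR (nat_bound d).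
Proof.
  unfold nat_bound. destruct (archimed d) as [H1 _].
  destruct (Z_le_gt_dec 0 (up d)) as [Hz|Hz].
  - rewrite INR_IZR_INZ, Z2Nat.id by auto. lra.
  - replace (Z.to_nat (up d)) with 0%nat by (destruct (up d); [lia|lia|reflexivity]).
    simpl. assert (Hz' : (up d < 0)%Z) by lia. apply IZR_lt in Hz'. lra.
Qed.

Lemma ln_le_compat x y : 0 < x -> x <= y -> ln x <= ln y.
Proof.
  intros Hx Hxy. destruct (Req_dec x y) as [->|Hne]; [lra|]. left; apply ln_increasing; lra.
Qed.

Lemma ln_sub_le a b : 0 < a -> 0 < b -> ln b - ln a <= (b - a) / a.
Proof.
  intros Ha Hb. pose proof (exp_ineq1_le (ln (b / a))) as E.
  rewrite exp_ln in E by (apply Rdiv_lt_0_compat; auto).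
  unfold Rdiv in E |- *. rewrite ln_mult, ln_Rinv in E by (auto; apply Rinv_0_lt_compat; auto).
  replace ((b - a) * / a) with (b * / a - 1) by (field; lra). lra.
Qed.

Section Staircase.

Variable dk : nat -> R.
Hypothesis dk0_nonneg : 0 <= dk 0.
Hypothesis dk_step : forall k, dk k + 1 <= dk (S k).

Lemma dk_ge_INR k : INR k <= dk k.
Proof. induction k as [|k IHk]; [simpl; lra|]. rewrite S_INR. pose proof (dk_step k); lra. Qed.

Lemma dk_mono k j : (k <= j)%nat -> dk k <= dk j.
Proof. induction 1 as [|j _ IH]; [lra|]. pose proof (dk_step j); lra. Qed.

Definition stair_upto (m : nat) (t : R) := sum_f_R0 (fun k => ramp (t - dk k)) m.
Definition stair_primitive_upto (m : nat) (t : R) := sum_f_R0 (fun k => ramp_primitive (t - dk k)) m.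

(* The series [sum_k ramp (d - dk k)] and [sum_k ramp_primitive (d - dk k)] only have finitely
   many nonzero terms at each [d], since [k <= dk k]. *)
Definition stair (d : R) := stair_upto (nat_bound d) d.
Definition stair_primitive (d : R) := stair_primitive_upto (nat_bound d) d.

Lemma stair_eq_upto n d : d <= INR n -> stair d = stair_upto n d.
Proof.
  intros Hn. pose proof (nat_bound_ge d).
  assert (Hz : forall m, d <= INR m -> forall k, (m < k)%nat -> ramp (d - dk k) = 0).
  { intros m Hm k Hk. apply ramp_nonpos. pose proof (dk_ge_INR k). pose proof (lt_INR _ _ Hk). lra. }
  unfold stair, stair_upto. destruct (le_lt_dec n (nat_bound d)).
  - apply sum_f_R0_eventually_zero; [apply (Hz n Hn)|lia].
  - symmetry; apply sum_f_R0_eventually_zero; [apply (Hz _ (nat_bound_ge d))|lia].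
Qed.

Lemma stair_primitive_eq_upto n d : d <= INR n -> stair_primitive d = stair_primitive_upto n d.
Proof.
  intros Hn. pose proof (nat_bound_ge d).
  assert (Hz : forall m, d <= INR m -> forall k, (m < k)%nat -> ramp_primitive (d - dk k) = 0).
  { intros m Hm k Hk. apply ramp_primitive_nonpos. pose proof (dk_ge_INR k). pose proof (lt_INR _ _ Hk). lra. }
  unfold stair_primitive, stair_primitive_upto. destruct (le_lt_dec n (nat_bound d)).
  - apply sum_f_R0_eventually_zero; [apply (Hz n Hn)|lia].
  - symmetry; apply sum_f_R0_eventually_zero; [apply (Hz _ (nat_bound_ge d))|lia].
Qed.

Lemma derivable_pt_lim_stair_primitive d : derivable_pt_lim stair_primitive d (stair d).
Proof.
  set (n := nat_bound (d + 1)). pose proof (nat_bound_ge (d + 1)) as Hn; fold n in Hn.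
  rewrite (stair_eq_upto n) by lra.
  apply (derivable_pt_lim_locally_ext (stair_primitive_upto n) _ d (d - 1) (d + 1)); [lra| |].
  - intros z Hz. symmetry. apply stair_primitive_eq_upto. lra.
  - apply (derivable_pt_lim_sum (fun k t => ramp_primitive (t - dk k)) (fun k t => ramp (t - dk k))).
    intro k. apply (derivable_pt_lim_shift ramp_primitive (- dk k)).
    apply derivable_pt_lim_ramp_primitive.
Qed.

Lemma stair_nonneg d : 0 <= stair d.
Proof. apply cond_pos_sum. intros; apply ramp_bounds. Qed.

Lemma stair_primitive_nonneg d : 0 <= stair_primitive d.
Proof. apply cond_pos_sum. intros; apply ramp_primitive_nonneg. Qed.

Lemma stair_below d : d <= dk 0 -> stair d = 0.
Proof.
  intros Hd. apply sum_eq_R0. intros k _. apply ramp_nonpos.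
  pose proof (dk_mono 0 k ltac:(lia)). lra.
Qed.

Lemma stair_primitive_below d : d <= dk 0 -> stair_primitive d = 0.
Proof.
  intros Hd. apply sum_eq_R0. intros k _. apply ramp_primitive_nonpos.
  pose proof (dk_mono 0 k ltac:(lia)). lra.
Qed.

Lemma stair_primitive_mono s t : s <= t -> stair_primitive s <= stair_primitive t.
Proof.
  intros Hst. set (n := nat_bound t). pose proof (nat_bound_ge t) as Hn; fold n in Hn.
  rewrite (stair_primitive_eq_upto n s), (stair_primitive_eq_upto n t) by lra.
  apply sum_growing. intros; apply ramp_primitive_mono; lra.
Qed.

Lemma stair_le_index n d : d <= dk n -> stair d <= INR n.
Proof.
  intros Hd. apply sum_f_R0_le_count.
  - intros; apply ramp_bounds.
  - intros k Hk. apply ramp_nonpos. pose proof (dk_mono n k Hk); lra.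
Qed.

Lemma stair_upto_increment m s t : s <= t ->
  0 <= stair_upto m t - stair_upto m s <= Rmin t (dk m + 1) - Rmin s (dk m + 1).
Proof.
  intros Hst. induction m as [|m IHm]; unfold stair_upto in *; simpl.
  - rewrite !ramp_shift. unfold Rmin; repeat destruct Rle_dec; lra.
  - rewrite !(ramp_shift _ (dk (S m))). pose proof (dk_step m).
    revert IHm. set (A1 := sum_f_R0 (fun k => ramp (t - dk k)) m).
    set (A2 := sum_f_R0 (fun k => ramp (s - dk k)) m). intros IH.
    unfold Rmin in *; repeat destruct Rle_dec; lra.
Qed.

Lemma stair_lipschitz_ordered s t : s <= t -> Rabs (stair s - stair t) <= Rabs (s - t).
Proof.
  intros Hst. set (n := nat_bound t). pose proof (nat_bound_ge t) as Hn; fold n in Hn.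
  rewrite (stair_eq_upto n s), (stair_eq_upto n t) by lra.
  pose proof (stair_upto_increment n s t Hst).
  rewrite Rabs_left1, Rabs_left1 by lra.
  assert (Rmin t (dk n + 1) - Rmin s (dk n + 1) <= t - s) by (unfold Rmin; repeat destruct Rle_dec; lra).
  lra.
Qed.

Lemma stair_lipschitz s t : Rabs (stair s - stair t) <= Rabs (s - t).
Proof.
  destruct (Rle_dec s t); [apply stair_lipschitz_ordered; lra|].
  rewrite Rabs_minus_sym, (Rabs_minus_sym s). apply stair_lipschitz_ordered; lra.
Qed.

Lemma stair_primitive_superlinear M : exists R0, forall t, R0 <= t -> M * t <= stair_primitive t.
Proof.
  set (k := nat_bound (2 * Rabs M)). pose proof (nat_bound_ge (2 * Rabs M)) as Hk; fold k in Hk.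
  exists (2 * dk k + 1). intros t Ht.
  pose proof (dk_ge_INR k). pose proof (pos_INR k).
  assert (Hk_terms : forall m, (m <= k)%nat -> INR (S m) * (t - dk k - 1/2) <= stair_primitive_upto m t).
  { induction m as [|m IHm]; intros Hm; unfold stair_primitive_upto in *; cbn [sum_f_R0].
    - pose proof (ramp_primitive_ge (t - dk 0)). pose proof (dk_mono 0 k ltac:(lia)). simpl; lra.
    - pose proof (ramp_primitive_ge (t - dk (S m))). pose proof (dk_mono (S m) k Hm).
      specialize (IHm ltac:(lia)). rewrite (S_INR (S m)). nra. }
  set (n := Nat.max k (nat_bound t)).
  assert (Hn : t <= INR n) by (pose proof (nat_bound_ge t); pose proof (le_INR (nat_bound t) n ltac:(lia)); lra).
  rewrite (stair_primitive_eq_upto n) by exact Hn.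
  assert (stair_primitive_upto k t <= stair_primitive_upto n t).
  { apply sum_f_R0_mono_index; [intros; apply ramp_primitive_nonneg|lia]. }
  specialize (Hk_terms k (le_n k)). rewrite S_INR in Hk_terms.
  assert (M * t <= (INR k + 1) * (t / 2)) by (pose proof (Rle_abs M); nra).
  nra.
Qed.


Section Profile.

Variables p w : R.
Hypothesis p_pos : 0 < p.
Hypothesis w_pos : 0 < w.
Hypothesis w_le_dk0 : w <= dk 0.

(* Only [d >= 0] matters; the linear extension to [d < 0] makes [slope] differentiable. *)
Definition slope := piecewise 0 (fun d => p + d) (fun d => p + ln (1 + d)).
Definition dslope := piecewise 0 (fun _ => 1) (fun d => / (1 + d)).

Lemma slope_eq d : 0 <= d -> slope d = p + ln (1 + d).
Proof.
  intros Hd. unfold slope. rewrite piecewise_right_glued; [reflexivity| |exact Hd].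
  cbv beta. rewrite !Rplus_0_r, ln_1; ring.
Qed.

Lemma dslope_eq d : 0 <= d -> dslope d = / (1 + d).
Proof.
  intros Hd. unfold dslope. rewrite piecewise_right_glued; [reflexivity| |exact Hd].
  cbv beta. rewrite Rplus_0_r, Rinv_1; ring.
Qed.

Lemma derivable_pt_lim_slope d : derivable_pt_lim slope d (dslope d).
Proof.
  apply derivable_pt_lim_piecewise; cbv beta.
  - rewrite !Rplus_0_r, ln_1; ring.
  - rewrite Rplus_0_r, Rinv_1; ring.
  - intros s _. apply (derivable_pt_lim_ext (fun t => p + t * 1)); [intro; cbv beta; lra|].
    apply derivable_pt_lim_affine.
  - intros s Hs. apply (derivable_pt_lim_ext (fun t => p + ln (t + 1))); [intro; do 2 f_equal; ring|].
    apply (derivable_pt_lim_value _ _ (0 + / (1 + s))); [|ring].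
    apply (derivable_pt_lim_plus (fun _ => p) (fun t => ln (t + 1))).
    + apply derivable_pt_lim_const.
    + apply derivable_pt_lim_shift. rewrite Rplus_comm. apply derivable_pt_lim_ln; lra.
Qed.

Lemma slope_ge d : 0 <= d -> p <= slope d.
Proof.
  intros Hd. rewrite slope_eq by exact Hd.
  pose proof (ln_le_compat 1 (1 + d) ltac:(lra) ltac:(lra)). rewrite ln_1 in *. lra.
Qed.

Lemma slope_lipschitz s t : 0 <= s -> 0 <= t -> Rabs (slope s - slope t) <= Rabs (s - t).
Proof.
  assert (Hord : forall s t, 0 <= s <= t -> 0 <= slope t - slope s <= t - s).
  { intros s0 t0 [H1 H2]. rewrite !slope_eq by lra.
    pose proof (ln_le_compat (1 + s0) (1 + t0) ltac:(lra) ltac:(lra)).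
    pose proof (ln_sub_le (1 + s0) (1 + t0) ltac:(lra) ltac:(lra)).
    assert ((1 + t0 - (1 + s0)) / (1 + s0) <= t0 - s0).
    { unfold Rdiv. replace (1 + t0 - (1 + s0)) with (t0 - s0) by ring.
      rewrite <- (Rmult_1_r (t0 - s0)) at 2. apply Rmult_le_compat_l; [lra|].
      rewrite <- Rinv_1. apply Rinv_le_contravar; lra. }
    lra. }
  intros Hs Ht. destruct (Rle_dec s t).
  - pose proof (Hord s t ltac:(lra)). rewrite (Rabs_minus_sym (slope s)), (Rabs_minus_sym s).
    rewrite !Rabs_right by lra. lra.
  - pose proof (Hord t s ltac:(lra)). rewrite !Rabs_right by lra. lra.
Qed.

Lemma inv_one_plus_bounds d : 0 <= d -> 0 < / (1 + d) <= 1.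
Proof.
  intros Hd. split; [apply Rinv_0_lt_compat; lra|]. rewrite <- Rinv_1. apply Rinv_le_contravar; lra.
Qed.

Lemma dslope_bounds d : 0 <= d -> 0 < dslope d <= 1.
Proof. intros Hd. rewrite dslope_eq by exact Hd. apply inv_one_plus_bounds, Hd. Qed.

Lemma mult_dslope_bounds x d : 0 <= x <= d -> 0 <= x * dslope d <= 1.
Proof.
  intros [H1 H2]. rewrite dslope_eq by lra. pose proof (inv_one_plus_bounds d ltac:(lra)).
  split; [apply Rmult_le_pos; lra|].
  apply Rle_trans with (d * / (1 + d)); [apply Rmult_le_compat_r; lra|].
  apply Rmult_le_reg_r with (1 + d); [lra|]. rewrite Rmult_assoc, Rinv_l by lra. lra.
Qed.

Lemma dslope_lipschitz s t : 0 <= s -> 0 <= t -> Rabs (dslope s - dslope t) <= Rabs (s - t).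
Proof.
  intros Hs Ht. rewrite !dslope_eq by auto.
  replace (/ (1 + s) - / (1 + t)) with ((t - s) * (/ (1 + s) * / (1 + t))) by (field; lra).
  rewrite Rabs_mult, (Rabs_minus_sym t).
  pose proof (inv_one_plus_bounds s Hs). pose proof (inv_one_plus_bounds t Ht).
  rewrite (Rabs_right (/ (1 + s) * / (1 + t))) by (apply Rle_ge, Rmult_le_pos; lra).
  rewrite <- (Rmult_1_r (Rabs (s - t))) at 2. apply Rmult_le_compat_l; [apply Rabs_pos|nra].
Qed.

Lemma mult_dslope_lipschitz s t : 0 <= s -> 0 <= t ->
  Rabs (s * dslope s - t * dslope t) <= Rabs (s - t).
Proof.
  intros Hs Ht. rewrite !dslope_eq by auto.
  replace (s * / (1 + s) - t * / (1 + t)) with ((s - t) * (/ (1 + s) * / (1 + t))) by (field; lra).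
  rewrite Rabs_mult.
  pose proof (inv_one_plus_bounds s Hs). pose proof (inv_one_plus_bounds t Ht).
  rewrite (Rabs_right (/ (1 + s) * / (1 + t))) by (apply Rle_ge, Rmult_le_pos; lra).
  rewrite <- (Rmult_1_r (Rabs (s - t))) at 2. apply Rmult_le_compat_l; [apply Rabs_pos|nra].
Qed.

Definition bump_height := p * w / 2.

(* [bump] cancels [F 0 = bump_height] near the vertex, so that [F (x - y) - bump y] vanishes at
   the origin and agrees with the cross-branch function on the axes. *)
Definition F := piecewise (- w) (fun s => stair_primitive (- s))
  (piecewise 0 (fun s => bump_height * ((1 + s / w) * (1 + s / w)))
     (fun s => bump_height + stair_primitive s + s * slope s)).
Definition dF := piecewise (- w) (fun s => - stair (- s))
  (piecewise 0 (fun s => p * (1 + s / w)) (fun s => stair s + slope s + s * dslope s)).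
Definition bump := piecewise w (fun y => bump_height * ((1 - y / w) * (1 - y / w))) (fun _ => 0).
Definition dbump := piecewise w (fun y => - p * (1 - y / w)) (fun _ => 0).

Lemma bump_height_pos : 0 < bump_height.
Proof. unfold bump_height; nra. Qed.

Lemma div_w_le_1 y : y <= w -> y / w <= 1.
Proof.
  intros Hy. apply Rmult_le_reg_r with w; [lra|]. unfold Rdiv; rewrite Rmult_assoc, Rinv_l by lra; lra.
Qed.

Lemma div_w_nonneg y : 0 <= y -> 0 <= y / w.
Proof. intros Hy. apply Rmult_le_pos; [lra|left; apply Rinv_0_lt_compat; lra]. Qed.

Lemma F_glue_left : stair_primitive (- - w) = bump_height * ((1 + - w / w) * (1 + - w / w)).
Proof.
  rewrite Ropp_involutive, stair_primitive_below by lra.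
  replace (- w / w) with (-1) by (field; lra). ring.
Qed.

Lemma F_glue_right : bump_height * ((1 + 0 / w) * (1 + 0 / w)) = bump_height + stair_primitive 0 + 0 * slope 0.
Proof. rewrite stair_primitive_below by lra. unfold Rdiv; ring. Qed.

Lemma dF_glue_left : - stair (- - w) = p * (1 + - w / w).
Proof.
  rewrite Ropp_involutive, stair_below by lra. replace (- w / w) with (-1) by (field; lra). ring.
Qed.

Lemma dF_glue_right : p * (1 + 0 / w) = stair 0 + slope 0 + 0 * dslope 0.
Proof. rewrite stair_below, slope_eq by lra. rewrite Rplus_0_r, ln_1. unfold Rdiv; ring. Qed.

Lemma F_far_left y : w <= y -> F (- y) = stair_primitive y.
Proof. intros Hy. unfold F. rewrite piecewise_left by lra. rewrite Ropp_involutive; reflexivity. Qed.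

Lemma F_near_left y : 0 <= y <= w -> F (- y) = bump_height * ((1 - y / w) * (1 - y / w)).
Proof.
  intros Hy. unfold F. destruct (Req_dec y w) as [->|Hne].
  - rewrite piecewise_left by lra. rewrite F_glue_left. unfold Rdiv; ring.
  - rewrite piecewise_right, piecewise_left by lra. unfold Rdiv; ring.
Qed.

Lemma F_right s : 0 <= s -> F s = bump_height + stair_primitive s + s * slope s.
Proof.
  intros Hs. unfold F. rewrite piecewise_right by lra.
  rewrite piecewise_right_glued; [reflexivity|exact F_glue_right|exact Hs].
Qed.

Lemma dF_far_left y : w <= y -> dF (- y) = - stair y.
Proof. intros Hy. unfold dF. rewrite piecewise_left by lra. rewrite Ropp_involutive; reflexivity. Qed.

Lemma dF_near_left y : 0 <= y <= w -> dF (- y) = p * (1 - y / w).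
Proof.
  intros Hy. unfold dF. destruct (Req_dec y w) as [->|Hne].
  - rewrite piecewise_left by lra. rewrite dF_glue_left. unfold Rdiv; ring.
  - rewrite piecewise_right, piecewise_left by lra. unfold Rdiv; ring.
Qed.

Lemma dF_right s : 0 <= s -> dF s = stair s + slope s + s * dslope s.
Proof.
  intros Hs. unfold dF. rewrite piecewise_right by lra.
  rewrite piecewise_right_glued; [reflexivity|exact dF_glue_right|exact Hs].
Qed.

Lemma bump_near y : y <= w -> bump y = bump_height * ((1 - y / w) * (1 - y / w)).
Proof. intros Hy. unfold bump. rewrite piecewise_left; auto. Qed.

Lemma bump_far y : w <= y -> bump y = 0.
Proof.
  intros Hy. unfold bump. rewrite piecewise_right_glued; [reflexivity| |exact Hy].
  replace (w / w) with 1 by (field; lra). ring.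
Qed.

Lemma dbump_near y : y <= w -> dbump y = - p * (1 - y / w).
Proof. intros Hy. unfold dbump. rewrite piecewise_left; auto. Qed.

Lemma dbump_far y : w <= y -> dbump y = 0.
Proof.
  intros Hy. unfold dbump. rewrite piecewise_right_glued; [reflexivity| |exact Hy].
  replace (w / w) with 1 by (field; lra). ring.
Qed.

Lemma derivable_pt_lim_F s : derivable_pt_lim F s (dF s).
Proof.
  apply derivable_pt_lim_piecewise.
  - rewrite piecewise_left by lra. exact F_glue_left.
  - rewrite piecewise_left by lra. exact dF_glue_left.
  - intros u _. apply (derivable_pt_lim_ext (fun t => stair_primitive (0 - t)));
      [intro; rewrite Rminus_0_l; reflexivity|].
    rewrite <- (Rminus_0_l u). apply derivable_pt_lim_reflect, derivable_pt_lim_stair_primitive.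
  - intros u _. apply derivable_pt_lim_piecewise.
    + exact F_glue_right.
    + exact dF_glue_right.
    + intros v _. apply (derivable_pt_lim_value _ _ _ _ (derivable_pt_lim_sq_affine bump_height 1 (/ w) v)).
      unfold bump_height, Rdiv. field. lra.
    + intros v _. apply (derivable_pt_lim_value _ _ ((0 + stair v) + (1 * slope v + v * dslope v)));
        [|ring].
      apply (derivable_pt_lim_plus (fun t => bump_height + stair_primitive t) (fun t => t * slope t)).
      * apply (derivable_pt_lim_plus (fun _ => bump_height) stair_primitive);
          [apply derivable_pt_lim_const|apply derivable_pt_lim_stair_primitive].
      * apply (derivable_pt_lim_mult (fun t => t) slope);
          [apply derivable_pt_lim_id|apply derivable_pt_lim_slope].
Qed.

Lemma derivable_pt_lim_bump y : derivable_pt_lim bump y (dbump y).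
Proof.
  apply derivable_pt_lim_piecewise.
  - replace (w / w) with 1 by (field; lra). ring.
  - replace (w / w) with 1 by (field; lra). ring.
  - intros v _.
    apply (derivable_pt_lim_ext (fun t => bump_height * ((1 + t * - / w) * (1 + t * - / w))));
      [intro; unfold Rdiv; ring|].
    apply (derivable_pt_lim_value _ _ _ _ (derivable_pt_lim_sq_affine bump_height 1 (- / w) v)).
    unfold bump_height, Rdiv. field. lra.
  - intros; apply derivable_pt_lim_const.
Qed.

Lemma F_nonneg s : 0 <= F s.
Proof.
  pose proof bump_height_pos.
  destruct (Rle_dec s (- w)); [|destruct (Rle_dec s 0)].
  - replace s with (- - s) by ring. rewrite F_far_left by lra. apply stair_primitive_nonneg.
  - replace s with (- - s) by ring. rewrite F_near_left by lra.
    apply Rmult_le_pos; [lra|apply Rle_0_sqr].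
  - rewrite F_right by lra. pose proof (stair_primitive_nonneg s). pose proof (slope_ge s ltac:(lra)). nra.
Qed.

Lemma bump_bounds y : 0 <= y -> 0 <= bump y <= bump_height.
Proof.
  intros Hy. pose proof bump_height_pos. destruct (Rle_dec y w).
  - rewrite bump_near by auto. pose proof (div_w_le_1 y r). pose proof (div_w_nonneg y Hy).
    set (a := 1 - y / w). assert (0 <= a * a <= 1) by (unfold a; nra).
    split; [apply Rmult_le_pos; lra|]. nra.
  - rewrite bump_far by lra; lra.
Qed.

Lemma bump_le_F x y : 0 <= x -> 0 <= y -> bump y <= F (x - y).
Proof.
  intros Hx Hy. pose proof bump_height_pos. destruct (Rle_dec w y).
  - rewrite bump_far by auto. apply F_nonneg.
  - rewrite bump_near by lra. pose proof (div_w_le_1 y ltac:(lra)). pose proof (div_w_nonneg y Hy).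
    destruct (Rle_dec (x - y) 0).
    + replace (x - y) with (- (y - x)) by ring. rewrite F_near_left by lra.
      assert (0 <= 1 - y / w <= 1 - (y - x) / w).
      { pose proof (div_w_nonneg x Hx). unfold Rdiv in *.
        replace ((y - x) * / w) with (y * / w - x * / w) by ring. lra. }
      apply Rmult_le_compat_l; [lra|]. nra.
    + rewrite F_right by lra. pose proof (stair_primitive_nonneg (x - y)).
      pose proof (slope_ge (x - y) ltac:(lra)).
      assert ((1 - y / w) * (1 - y / w) <= 1) by nra.
      assert (bump_height * ((1 - y / w) * (1 - y / w)) <= bump_height) by nra.
      assert (0 <= (x - y) * slope (x - y)) by (apply Rmult_le_pos; lra). lra.
Qed.


Lemma slope_le_dF s : 0 <= s -> slope s <= dF s.
Proof.
  intros Hs. rewrite dF_right by auto. pose proof (stair_nonneg s).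
  pose proof (mult_dslope_bounds s s ltac:(lra)). lra.
Qed.

Lemma dF_near_left_nonneg y : 0 <= y <= w -> 0 <= dF (- y).
Proof. intros Hy. rewrite dF_near_left by auto. pose proof (div_w_le_1 y ltac:(lra)). nra. Qed.

Lemma dF_ge s : 0 <= s -> p <= dF s.
Proof. intros Hs. pose proof (slope_le_dF s Hs). pose proof (slope_ge s Hs). lra. Qed.

Lemma dF_ge_near_left y s : 0 <= y <= w -> - y <= s -> dF (- y) <= dF s.
Proof.
  intros Hy Hs. rewrite dF_near_left by auto.
  destruct (Rle_dec s 0).
  - replace s with (- (- s)) by ring. rewrite dF_near_left by lra.
    assert (- s / w <= y / w) by (unfold Rdiv; apply Rmult_le_compat_r; [left; apply Rinv_0_lt_compat|]; lra).
    nra.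
  - pose proof (dF_ge s ltac:(lra)). pose proof (div_w_nonneg y ltac:(lra)). nra.
Qed.

Lemma dF_lipschitz s t : Rabs (dF s - dF t) <= (3 + p / w) * Rabs (s - t).
Proof.
  assert (Hpw : 0 < p / w) by (apply Rdiv_lt_0_compat; lra).
  apply (lipschitz_on_piecewise (- w) _ _ (3 + p / w)); [cbv beta; rewrite piecewise_left by lra;
    exact dF_glue_left|lra| | |exact I|exact I].
  - intros a b _ _. rewrite Rabs_minus_sym.
    replace (- stair (- b) - - stair (- a)) with (stair (- a) - stair (- b)) by ring.
    eapply Rle_trans; [apply stair_lipschitz|].
    replace (- a - - b) with (- (a - b)) by ring. rewrite Rabs_Ropp.
    pose proof (Rabs_pos (a - b)). nra.
  - intros a b _ _. apply (lipschitz_on_piecewise 0); [exact dF_glue_right|lra| | |exact I|exact I].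
    + intros u v _ _. replace (p * (1 + u / w) - p * (1 + v / w)) with (p / w * (u - v)) by (field; lra).
      rewrite Rabs_mult, (Rabs_right (p / w)) by lra. pose proof (Rabs_pos (u - v)). nra.
    + intros u v Hu Hv.
      replace (stair u + slope u + u * dslope u - (stair v + slope v + v * dslope v))
        with ((stair u - stair v) + (slope u - slope v) + (u * dslope u - v * dslope v)) by ring.
      eapply Rle_trans; [apply Rabs_triang|].
      eapply Rle_trans; [apply Rplus_le_compat_r; apply Rabs_triang|].
      pose proof (stair_lipschitz u v). pose proof (slope_lipschitz u v Hu Hv).
      pose proof (mult_dslope_lipschitz u v Hu Hv). pose proof (Rabs_pos (u - v)). nra.
Qed.

Lemma dbump_lipschitz s t : Rabs (dbump s - dbump t) <= (p / w) * Rabs (s - t).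
Proof.
  assert (Hpw : 0 < p / w) by (apply Rdiv_lt_0_compat; lra).
  apply (lipschitz_on_piecewise w); [replace (w / w) with 1 by (field; lra); ring|lra| | |exact I|exact I].
  - intros a b _ _. replace (- p * (1 - a / w) - - p * (1 - b / w)) with (p / w * (a - b)) by (field; lra).
    rewrite Rabs_mult, (Rabs_right (p / w)) by lra. lra.
  - intros a b _ _. replace (0 - 0) with 0 by ring. rewrite Rabs_R0. pose proof (Rabs_pos (a - b)). nra.
Qed.

Lemma dbump_bound y : 0 <= y -> Rabs (dbump y) <= p.
Proof.
  intros Hy. destruct (Rle_dec y w).
  - rewrite dbump_near by auto. pose proof (div_w_le_1 y r). pose proof (div_w_nonneg y Hy).
    rewrite Rabs_left1 by nra. nra.
  - rewrite dbump_far by lra. rewrite Rabs_R0; lra.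
Qed.

Definition G_same x y := F (x - y) - bump y.
Definition G_same_x x y := dF (x - y).
Definition G_same_y x y := - dF (x - y) - dbump y.
Definition G_cross x y := stair_primitive (x + y) + x * slope (x + y).
Definition G_cross_x x y := stair (x + y) + slope (x + y) + x * dslope (x + y).
Definition G_cross_y x y := stair (x + y) + x * dslope (x + y).

Lemma derivable_pt_lim_G_same_x x y : derivable_pt_lim (fun s => G_same s y) x (G_same_x x y).
Proof.
  apply (derivable_pt_lim_value _ _ (dF (x - y) - 0)); [|unfold G_same_x; ring].
  apply (derivable_pt_lim_minus (fun s => F (s - y)) (fun _ => bump y)); [|apply derivable_pt_lim_const].
  apply (derivable_pt_lim_shift F (- y)), derivable_pt_lim_F.
Qed.

Lemma derivable_pt_lim_G_same_y x y : derivable_pt_lim (fun t => G_same x t) y (G_same_y x y).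
Proof.
  apply (derivable_pt_lim_minus (fun t => F (x - t)) bump); [|apply derivable_pt_lim_bump].
  apply derivable_pt_lim_reflect, derivable_pt_lim_F.
Qed.

Lemma derivable_pt_lim_G_cross_x x y : derivable_pt_lim (fun s => G_cross s y) x (G_cross_x x y).
Proof.
  apply (derivable_pt_lim_value _ _ (stair (x + y) + (1 * slope (x + y) + x * dslope (x + y))));
    [|unfold G_cross_x; ring].
  apply (derivable_pt_lim_plus (fun s => stair_primitive (s + y)) (fun s => s * slope (s + y))).
  - apply (derivable_pt_lim_shift stair_primitive), derivable_pt_lim_stair_primitive.
  - apply (derivable_pt_lim_mult (fun s => s) (fun s => slope (s + y))); [apply derivable_pt_lim_id|].
    apply (derivable_pt_lim_shift slope), derivable_pt_lim_slope.
Qed.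

Lemma derivable_pt_lim_G_cross_y x y : derivable_pt_lim (fun t => G_cross x t) y (G_cross_y x y).
Proof.
  apply (derivable_pt_lim_ext (fun t => stair_primitive (t + x) + x * slope (t + x)));
    [intro z; unfold G_cross; rewrite (Rplus_comm x z); reflexivity|].
  apply (derivable_pt_lim_value _ _ (stair (y + x) + (0 * slope (y + x) + x * dslope (y + x))));
    [|unfold G_cross_y; rewrite (Rplus_comm x); ring].
  apply (derivable_pt_lim_plus (fun t => stair_primitive (t + x)) (fun t => x * slope (t + x))).
  - apply (derivable_pt_lim_shift stair_primitive), derivable_pt_lim_stair_primitive.
  - apply (derivable_pt_lim_mult (fun _ => x) (fun t => slope (t + x))); [apply derivable_pt_lim_const|].
    apply (derivable_pt_lim_shift slope), derivable_pt_lim_slope.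
Qed.

Lemma G_same_continuous x y : continuous2_at G_same x y.
Proof.
  assert (C : continuous2_at (fun a b => F (1 * a + -1 * b) + - bump (0 * a + 1 * b)) x y).
  { apply (continuous2_at_plus (fun a b => F (1 * a + -1 * b)) (fun a b => - bump (0 * a + 1 * b))).
    - apply continuous2_at_comp_linear, derivable_continuous_pt. eexists; apply derivable_pt_lim_F.
    - apply continuous2_at_opp, continuous2_at_comp_linear, derivable_continuous_pt.
      eexists; apply derivable_pt_lim_bump. }
  intros eps Heps; destruct (C eps Heps) as [d [Pd Qd]]. exists d; split; auto.
  intros a b Ha Hb. specialize (Qd a b Ha Hb). unfold G_same.
  replace (a - b) with (1 * a + -1 * b) by ring. replace (x - y) with (1 * x + -1 * y) by ring.
  replace (bump b) with (bump (0 * a + 1 * b)) by (f_equal; ring).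
  replace (bump y) with (bump (0 * x + 1 * y)) by (f_equal; ring). exact Qd.
Qed.

Lemma G_cross_continuous x y : continuous2_at G_cross x y.
Proof.
  assert (C : continuous2_at (fun a b => stair_primitive (1 * a + 1 * b) + a * slope (1 * a + 1 * b)) x y).
  { apply (continuous2_at_plus (fun a b => stair_primitive (1 * a + 1 * b)) (fun a b => a * slope (1 * a + 1 * b))).
    - apply continuous2_at_comp_linear, derivable_continuous_pt.
      eexists; apply derivable_pt_lim_stair_primitive.
    - apply (continuous2_at_mult (fun a _ => a) (fun a b => slope (1 * a + 1 * b))); [apply continuous2_at_fst|].
      apply continuous2_at_comp_linear, derivable_continuous_pt. eexists; apply derivable_pt_lim_slope. }
  intros eps Heps; destruct (C eps Heps) as [d [Pd Qd]]. exists d; split; auto.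
  intros a b Ha Hb. specialize (Qd a b Ha Hb). unfold G_cross.
  replace (a + b) with (1 * a + 1 * b) by ring. replace (x + y) with (1 * x + 1 * y) by ring. exact Qd.
Qed.

Lemma G_same_cross_y_axis y : 0 <= y -> G_same 0 y = G_cross 0 y.
Proof.
  intros Hy. unfold G_same, G_cross. rewrite Rminus_0_l, Rplus_0_l, Rmult_0_l, Rplus_0_r.
  destruct (Rle_dec y w).
  - rewrite F_near_left, bump_near, stair_primitive_below by lra. ring.
  - rewrite F_far_left, bump_far by lra. ring.
Qed.

Lemma G_same_cross_x_axis x : 0 <= x -> G_same x 0 = G_cross x 0.
Proof.
  intros Hx. unfold G_same, G_cross. rewrite !Rminus_0_r, !Rplus_0_r.
  rewrite F_right, bump_near by lra. unfold Rdiv. ring.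
Qed.

Lemma G_same_y_y_axis y : 0 <= y -> G_same_y 0 y = stair y.
Proof.
  intros Hy. unfold G_same_y. rewrite Rminus_0_l. destruct (Rle_dec y w).
  - rewrite dF_near_left, dbump_near, stair_below by lra. ring.
  - rewrite dF_far_left, dbump_far by lra. ring.
Qed.

Lemma G_cross_y_y_axis y : G_cross_y 0 y = stair y.
Proof. unfold G_cross_y. rewrite Rplus_0_l; ring. Qed.

Lemma G_same_x_x_axis x : G_same_x x 0 = dF x.
Proof. unfold G_same_x. rewrite Rminus_0_r; reflexivity. Qed.

Lemma G_cross_x_x_axis x : 0 <= x -> G_cross_x x 0 = dF x.
Proof. intros Hx. unfold G_cross_x. rewrite Rplus_0_r, dF_right; auto. Qed.

Lemma G_same_x_y_axis_neg_part y : 0 <= y -> Rmin (G_same_x 0 y) 0 = - stair y.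
Proof.
  intros Hy. unfold G_same_x. rewrite Rminus_0_l. destruct (Rle_dec y w).
  - rewrite stair_below by lra. rewrite Rmin_right; [ring|]. apply dF_near_left_nonneg; lra.
  - rewrite dF_far_left by lra. pose proof (stair_nonneg y). rewrite Rmin_left; lra.
Qed.

Lemma G_same_y_x_axis_nonpos x : 0 <= x -> 0 <= - G_same_y x 0.
Proof.
  intros Hx. unfold G_same_y. rewrite Rminus_0_r, dbump_near by lra.
  pose proof (dF_ge x Hx). unfold Rdiv in *. lra.
Qed.

Lemma G_cross_y_bounds x y : 0 <= x -> 0 <= y -> 0 <= G_cross_y x y <= stair (x + y) + 1.
Proof.
  intros Hx Hy. unfold G_cross_y. pose proof (mult_dslope_bounds x (x + y) ltac:(lra)).
  pose proof (stair_nonneg (x + y)). lra.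
Qed.

Lemma G_cross_x_ge x y : 0 <= x -> 0 <= y -> slope (x + y) <= G_cross_x x y.
Proof.
  intros Hx Hy. unfold G_cross_x. pose proof (mult_dslope_bounds x (x + y) ltac:(lra)).
  pose proof (stair_nonneg (x + y)). lra.
Qed.

(* On one branch the two momenta [G_x] and [- G_y] are equal or ordered in [[0, G_x]]; this is
   what makes the Hamiltonian inequality hold there by monotonicity alone. *)
Lemma G_same_momenta_ordered x y : 0 <= x -> 0 <= y ->
  - G_same_y x y = G_same_x x y \/ (0 <= - G_same_y x y /\ - G_same_y x y <= G_same_x x y).
Proof.
  intros Hx Hy. unfold G_same_y, G_same_x. destruct (Rle_dec w y).
  - left. rewrite dbump_far by auto. ring.
  - right. rewrite dbump_near by lra.
    pose proof (dF_ge_near_left y (x - y) ltac:(lra) ltac:(lra)) as Hmono.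
    rewrite dF_near_left in Hmono by lra.
    pose proof (div_w_le_1 y ltac:(lra)). assert (0 <= p * (1 - y / w)) by nra. split; lra.
Qed.

Lemma G_same_nonneg x y : 0 <= x -> 0 <= y -> 0 <= G_same x y.
Proof. intros Hx Hy. unfold G_same. pose proof (bump_le_F x y Hx Hy). lra. Qed.

Lemma G_cross_nonneg x y : 0 <= x -> 0 <= y -> 0 <= G_cross x y.
Proof.
  intros Hx Hy. unfold G_cross. pose proof (stair_primitive_nonneg (x + y)).
  pose proof (slope_ge (x + y) ltac:(lra)). nra.
Qed.

Lemma G_same_origin : G_same 0 0 = 0.
Proof.
  unfold G_same. rewrite Rminus_0_r, <- Ropp_0, F_near_left, bump_near by lra. rewrite Ropp_0. ring.
Qed.

Lemma G_cross_origin : G_cross 0 0 = 0.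
Proof. unfold G_cross. rewrite Rplus_0_r, Rmult_0_l, Rplus_0_r. apply stair_primitive_below; lra. Qed.

Lemma G_same_diag x : 0 <= x -> 0 <= G_same x x <= bump_height.
Proof.
  intros Hx. unfold G_same. replace (x - x) with (- 0) by ring.
  rewrite F_near_left by lra. pose proof (bump_bounds x Hx). unfold Rdiv; rewrite Rmult_0_l, Rminus_0_r, Rmult_1_r.
  lra.
Qed.

Lemma G_same_lower x y : 0 <= x -> 0 <= y -> stair_primitive (Rabs (x - y)) - bump_height <= G_same x y.
Proof.
  intros Hx Hy. unfold G_same. pose proof (bump_bounds y Hy). pose proof bump_height_pos.
  destruct (Rle_dec 0 (x - y)).
  - rewrite Rabs_right, F_right by lra. pose proof (slope_ge (x - y) r).
    assert (0 <= (x - y) * slope (x - y)) by (apply Rmult_le_pos; lra). lra.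
  - rewrite Rabs_left by lra. destruct (Rle_dec (- (x - y)) w).
    + rewrite stair_primitive_below by lra. pose proof (F_nonneg (x - y)). lra.
    + replace (F (x - y)) with (F (- (- (x - y)))) by (f_equal; ring). rewrite F_far_left by lra. lra.
Qed.

Lemma G_cross_lower x y : 0 <= x -> 0 <= y -> stair_primitive (x + y) <= G_cross x y.
Proof.
  intros Hx Hy. unfold G_cross. pose proof (slope_ge (x + y) ltac:(lra)).
  assert (0 <= x * slope (x + y)) by (apply Rmult_le_pos; lra). lra.
Qed.

Lemma abs_sub_sub_le a b c d : Rabs (a - b - (c - d)) <= Rabs (a - c) + Rabs (b - d).
Proof.
  replace (a - b - (c - d)) with ((a - c) + - (b - d)) by ring.
  eapply Rle_trans; [apply Rabs_triang|]. rewrite Rabs_Ropp; lra.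
Qed.

Lemma G_same_grad_lipschitz x y x' y' :
  Rabs (G_same_x x y - G_same_x x' y') + Rabs (G_same_y x y - G_same_y x' y')
    <= (6 + 3 * (p / w)) * (Rabs (x - x') + Rabs (y - y')).
Proof.
  unfold G_same_x, G_same_y.
  pose proof (dF_lipschitz (x - y) (x' - y')). pose proof (dbump_lipschitz y y').
  pose proof (abs_sub_sub_le x y x' y') as Hd.
  assert (Hpw : 0 < p / w) by (apply Rdiv_lt_0_compat; lra).
  pose proof (Rabs_pos (x - x')); pose proof (Rabs_pos (y - y')).
  replace (- dF (x - y) - dbump y - (- dF (x' - y') - dbump y'))
    with (- (dF (x - y) - dF (x' - y')) + - (dbump y - dbump y')) by ring.
  pose proof (Rabs_triang (- (dF (x - y) - dF (x' - y'))) (- (dbump y - dbump y'))) as T.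
  rewrite !Rabs_Ropp in T.
  assert ((3 + p / w) * Rabs (x - y - (x' - y')) <= (3 + p / w) * (Rabs (x - x') + Rabs (y - y')))
    by (apply Rmult_le_compat_l; lra).
  assert (p / w * Rabs (y - y') <= p / w * (Rabs (x - x') + Rabs (y - y')))
    by (apply Rmult_le_compat_l; lra).
  nra.
Qed.

Lemma mult_dslope_diff_le K x x' d d' : 0 <= x -> 0 <= x' <= K -> 0 <= d -> 0 <= d' ->
  Rabs (x * dslope d - x' * dslope d') <= Rabs (x - x') + K * Rabs (d - d').
Proof.
  intros Hx Hx' Hd Hd'.
  replace (x * dslope d - x' * dslope d') with ((x - x') * dslope d + x' * (dslope d - dslope d')) by ring.
  eapply Rle_trans; [apply Rabs_triang|]. rewrite !Rabs_mult.
  pose proof (dslope_bounds d Hd). pose proof (dslope_lipschitz d d' Hd Hd').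
  rewrite (Rabs_right (dslope d)), (Rabs_right x') by lra.
  pose proof (Rabs_pos (x - x')). pose proof (Rabs_pos (dslope d - dslope d')). pose proof (Rabs_pos (d - d')).
  assert (Rabs (x - x') * dslope d <= Rabs (x - x')) by nra.
  assert (x' * Rabs (dslope d - dslope d') <= K * Rabs (d - d')) by (apply Rmult_le_compat; lra).
  lra.
Qed.

Lemma G_cross_grad_lipschitz K x y x' y' : 0 <= x -> 0 <= y -> 0 <= x' -> 0 <= y' -> x' <= K ->
  Rabs (G_cross_x x y - G_cross_x x' y') + Rabs (G_cross_y x y - G_cross_y x' y')
    <= (6 + 2 * K) * (Rabs (x - x') + Rabs (y - y')).
Proof.
  intros Hx Hy Hx' Hy' HK. unfold G_cross_x, G_cross_y.
  set (d := x + y). set (d' := x' + y').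
  assert (Hd : Rabs (d - d') <= Rabs (x - x') + Rabs (y - y')).
  { unfold d, d'. replace (x + y - (x' + y')) with ((x - x') + (y - y')) by ring. apply Rabs_triang. }
  pose proof (stair_lipschitz d d'). pose proof (slope_lipschitz d d' ltac:(unfold d; lra) ltac:(unfold d'; lra)).
  pose proof (mult_dslope_diff_le K x x' d d' Hx ltac:(lra) ltac:(unfold d; lra) ltac:(unfold d'; lra)).
  replace (stair d + slope d + x * dslope d - (stair d' + slope d' + x' * dslope d'))
    with ((stair d - stair d') + (slope d - slope d') + (x * dslope d - x' * dslope d')) by ring.
  replace (stair d + x * dslope d - (stair d' + x' * dslope d'))
    with ((stair d - stair d') + (x * dslope d - x' * dslope d')) by ring.
  pose proof (Rabs_triang (stair d - stair d' + (slope d - slope d')) (x * dslope d - x' * dslope d')).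
  pose proof (Rabs_triang (stair d - stair d') (slope d - slope d')).
  pose proof (Rabs_triang (stair d - stair d') (x * dslope d - x' * dslope d')).
  pose proof (Rabs_pos (x - x')); pose proof (Rabs_pos (y - y')).
  assert (K * Rabs (d - d') <= K * (Rabs (x - x') + Rabs (y - y'))) by (apply Rmult_le_compat_l; lra).
  nra.
Qed.

Lemma G_same_grad_bound K x y : 0 <= y -> Rabs (x - y) <= K ->
  Rabs (G_same_x x y) + Rabs (G_same_y x y) <= 3 * p + 2 * (3 + p / w) * K.
Proof.
  intros Hy HK. unfold G_same_x, G_same_y.
  pose proof (dF_lipschitz (x - y) 0) as Hlip.
  assert (HF0 : dF 0 = p) by (rewrite dF_right, stair_below, slope_eq by lra; rewrite Rplus_0_r, ln_1; ring).
  rewrite HF0, Rminus_0_r in Hlip.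
  pose proof (dbump_bound y Hy).
  assert (Hpw : 0 < p / w) by (apply Rdiv_lt_0_compat; lra).
  assert ((3 + p / w) * Rabs (x - y) <= (3 + p / w) * K) by (apply Rmult_le_compat_l; lra).
  assert (Rabs (dF (x - y)) <= p + (3 + p / w) * K).
  { replace (dF (x - y)) with ((dF (x - y) - p) + p) by ring. eapply Rle_trans; [apply Rabs_triang|].
    rewrite (Rabs_right p) by lra. lra. }
  pose proof (Rabs_triang (- dF (x - y)) (- dbump y)) as T. rewrite !Rabs_Ropp in T.
  replace (- dF (x - y) - dbump y) with (- dF (x - y) + - dbump y) by ring. lra.
Qed.

Lemma G_cross_grad_bound K x y : 0 <= x -> 0 <= y -> x + y <= K ->
  Rabs (G_cross_x x y) + Rabs (G_cross_y x y) <= 3 * K + p + 2.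
Proof.
  intros Hx Hy HK.
  pose proof (G_cross_y_bounds x y Hx Hy). pose proof (G_cross_x_ge x y Hx Hy). pose proof (slope_ge (x + y) ltac:(lra)).
  assert (Hst : stair (x + y) <= x + y).
  { pose proof (stair_lipschitz (x + y) 0) as Hst. rewrite (stair_below 0), !Rminus_0_r in Hst by lra.
    rewrite (Rabs_right (x + y)) in Hst by lra. pose proof (Rle_abs (stair (x + y))). lra. }
  assert (Hsl : slope (x + y) - p <= x + y).
  { pose proof (slope_lipschitz (x + y) 0 ltac:(lra) ltac:(lra)) as Hsl.
    rewrite (slope_eq 0), Rplus_0_r, ln_1, !Rminus_0_r, Rplus_0_r in Hsl by lra.
    rewrite (Rabs_right (x + y)) in Hsl by lra. pose proof (Rle_abs (slope (x + y) - p)). lra. }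
  pose proof (mult_dslope_bounds x (x + y) ltac:(lra)).
  rewrite (Rabs_right (G_cross_x x y)), (Rabs_right (G_cross_y x y)) by lra.
  unfold G_cross_x, G_cross_y. lra.
Qed.

Definition C11_constant (K : R) := 6 + 2 * Rabs K + 3 * (p * p).

Section Rescaled.

Variable gamma : R.
Hypothesis gamma_pos : 0 < gamma.

Definition lam := Rmax 1 gamma.

(* Rescaling by [lam >= gamma] divides second derivatives by [lam]; the width [w] is tied to
   [gamma] so that the bump contributes [lam * bump_height = gamma / 2] on the diagonal and
   [p / (lam * w) = p^2 / gamma] to the second derivatives. *)
Hypothesis w_spec : lam * p * w = gamma.

Definition G := branchwise (fun x y => lam * G_same (x / lam) (y / lam))
  (fun x y => lam * G_cross (x / lam) (y / lam)).
Definition Gx := branchwise (fun x y => G_same_x (x / lam) (y / lam))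
  (fun x y => G_cross_x (x / lam) (y / lam)).
Definition Gy := branchwise (fun x y => G_same_y (x / lam) (y / lam))
  (fun x y => G_cross_y (x / lam) (y / lam)).

Lemma lam_ge_1 : 1 <= lam.
Proof. apply Rmax_l. Qed.

Lemma lam_ge_gamma : gamma <= lam.
Proof. apply Rmax_r. Qed.

Lemma lam_pos : 0 < lam.
Proof. pose proof lam_ge_1; lra. Qed.

Lemma lam_bump_height : lam * bump_height = gamma / 2.
Proof. unfold bump_height. rewrite <- w_spec. field. Qed.

Lemma div_lam_nonneg x : 0 <= x -> 0 <= x / lam.
Proof. intros; apply Rmult_le_pos; [lra|left; apply Rinv_0_lt_compat, lam_pos]. Qed.

Lemma abs_div_lam u v : Rabs (u / lam - v / lam) = Rabs (u - v) / lam.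
Proof.
  pose proof lam_pos. replace (u / lam - v / lam) with ((u - v) / lam) by (field; lra).
  unfold Rdiv. rewrite Rabs_mult, (Rabs_right (/ lam)); auto. left; apply Rinv_0_lt_compat; auto.
Qed.

Lemma G_continuous N : cont_J2 N G.
Proof.
  pose proof lam_pos. apply cont_J2_branchwise.
  - intros x y _ _. apply continuous2_at_rescale; [lra|]. apply G_same_continuous.
  - intros x y _ _. apply continuous2_at_rescale; [lra|]. apply G_cross_continuous.
  - intros y Hy. rewrite Rdiv_0_l, G_same_cross_y_axis by (apply div_lam_nonneg; auto). reflexivity.
  - intros x Hx. rewrite Rdiv_0_l, G_same_cross_x_axis by (apply div_lam_nonneg; auto). reflexivity.
Qed.

Lemma G_branch_deriv a x b y :
  branch_deriv (fun s => G a s b y) x (Gx a x b y) /\ branch_deriv (fun t => G a x b t) y (Gy a x b y).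
Proof.
  pose proof lam_pos. unfold G, Gx, Gy, branchwise.
  destruct (Nat.eq_dec a b); split; apply derivable_pt_lim_branch.
  - apply (derivable_pt_lim_rescale (fun s => G_same s (y / lam))); [lra|apply derivable_pt_lim_G_same_x].
  - apply (derivable_pt_lim_rescale (fun t => G_same (x / lam) t)); [lra|apply derivable_pt_lim_G_same_y].
  - apply (derivable_pt_lim_rescale (fun s => G_cross s (y / lam))); [lra|apply derivable_pt_lim_G_cross_x].
  - apply (derivable_pt_lim_rescale (fun t => G_cross (x / lam) t)); [lra|apply derivable_pt_lim_G_cross_y].
Qed.

Lemma G_grad_lipschitz_same x y x' y' :
  Rabs (G_same_x (x / lam) (y / lam) - G_same_x (x' / lam) (y' / lam))
  + Rabs (G_same_y (x / lam) (y / lam) - G_same_y (x' / lam) (y' / lam))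
  <= (6 / lam + 3 * (p * p) / gamma) * (Rabs (x - x') + Rabs (y - y')).
Proof.
  pose proof lam_pos. pose proof (G_same_grad_lipschitz (x / lam) (y / lam) (x' / lam) (y' / lam)) as T.
  rewrite !abs_div_lam in T.
  replace ((6 + 3 * (p / w)) * (Rabs (x - x') / lam + Rabs (y - y') / lam))
    with ((6 / lam + 3 * (p * p) / gamma) * (Rabs (x - x') + Rabs (y - y'))) in T; [exact T|].
  rewrite <- w_spec. field. lra.
Qed.

Lemma G_grad_lipschitz_cross K x y x' y' : 0 <= x -> 0 <= y -> 0 <= x' -> 0 <= y' -> x' <= K ->
  Rabs (G_cross_x (x / lam) (y / lam) - G_cross_x (x' / lam) (y' / lam))
  + Rabs (G_cross_y (x / lam) (y / lam) - G_cross_y (x' / lam) (y' / lam))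
  <= (6 + 2 * K) / lam * (Rabs (x - x') + Rabs (y - y')).
Proof.
  intros Hx Hy Hx' Hy' HK. pose proof lam_pos. pose proof lam_ge_1.
  assert (HK' : x' / lam <= K).
  { apply Rmult_le_reg_r with lam; auto. unfold Rdiv; rewrite Rmult_assoc, Rinv_l by lra. nra. }
  pose proof (G_cross_grad_lipschitz K (x / lam) (y / lam) (x' / lam) (y' / lam) (div_lam_nonneg _ Hx)
    (div_lam_nonneg _ Hy) (div_lam_nonneg _ Hx') (div_lam_nonneg _ Hy') HK') as T.
  rewrite !abs_div_lam in T.
  replace ((6 + 2 * K) * (Rabs (x - x') / lam + Rabs (y - y') / lam))
    with ((6 + 2 * K) / lam * (Rabs (x - x') + Rabs (y - y'))) in T by (field; lra).
  exact T.
Qed.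

Lemma G_grad_lipschitz a b x y x' y' K : 0 <= x -> 0 <= y -> 0 <= x' -> 0 <= y' -> 0 <= K ->
  (a <> b -> x' <= K) ->
  Rabs (Gx a x b y - Gx a x' b y') + Rabs (Gy a x b y - Gy a x' b y')
    <= ((6 + 2 * K) / lam + 3 * (p * p) / gamma) * (Rabs (x - x') + Rabs (y - y')).
Proof.
  intros Hx Hy Hx' Hy' HK HxK. pose proof lam_pos.
  pose proof (Rabs_pos (x - x')). pose proof (Rabs_pos (y - y')).
  assert (0 <= 2 * K / lam) by (apply Rmult_le_pos; [lra|left; apply Rinv_0_lt_compat; lra]).
  assert (0 <= 3 * (p * p) / gamma) by (apply Rmult_le_pos; [nra|left; apply Rinv_0_lt_compat; lra]).
  unfold Gx, Gy, branchwise. destruct (Nat.eq_dec a b) as [Hab|Hab].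
  - eapply Rle_trans; [apply G_grad_lipschitz_same|]. apply Rmult_le_compat_r; [lra|].
    unfold Rdiv in *. lra.
  - eapply Rle_trans; [apply (G_grad_lipschitz_cross K); auto|]. apply Rmult_le_compat_r; lra.
Qed.

Lemma Gx_continuous_half a b y : 0 <= y -> cont_half (fun s => Gx a s b y).
Proof.
  intros Hy. apply cont_half_of_local_lipschitz. intros x Hx. pose proof lam_pos.
  exists ((6 + 2 * x) / lam + 3 * (p * p) / gamma). split.
  { assert (0 <= (6 + 2 * x) / lam) by (apply Rmult_le_pos; [lra|left; apply Rinv_0_lt_compat; lra]).
    assert (0 <= 3 * (p * p) / gamma) by (apply Rmult_le_pos; [nra|left; apply Rinv_0_lt_compat; lra]).
    lra. }
  intros x' Hx'. pose proof (G_grad_lipschitz a b x' y x y x Hx' Hy Hx Hy Hx (fun _ => Rle_refl x)) as T.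
  rewrite Rminus_diag, Rabs_R0, Rplus_0_r in T.
  pose proof (Rabs_pos (Gy a x' b y - Gy a x b y)). lra.
Qed.

Lemma Gy_continuous_half a x b : 0 <= x -> cont_half (fun t => Gy a x b t).
Proof.
  intros Hx. apply cont_half_of_local_lipschitz. intros y Hy. pose proof lam_pos.
  exists ((6 + 2 * x) / lam + 3 * (p * p) / gamma). split.
  { assert (0 <= (6 + 2 * x) / lam) by (apply Rmult_le_pos; [lra|left; apply Rinv_0_lt_compat; lra]).
    assert (0 <= 3 * (p * p) / gamma) by (apply Rmult_le_pos; [nra|left; apply Rinv_0_lt_compat; lra]).
    lra. }
  intros y' Hy'. pose proof (G_grad_lipschitz a b x y' x y x Hx Hy' Hx Hy Hx (fun _ => Rle_refl x)) as T.
  rewrite Rminus_diag, Rabs_R0, Rplus_0_l in T.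
  pose proof (Rabs_pos (Gx a x b y' - Gx a x b y)). lra.
Qed.

Lemma G_C11 N K a b x y x' y' : 0 < K ->
  inJ N a x -> inJ N b y -> inJ N a x' -> inJ N b y' -> dJ a x' b y' <= K ->
  Rabs (Gx a x b y - Gx a x' b y') + Rabs (Gy a x b y - Gy a x' b y')
    <= C11_constant K / gamma * (Rabs (x - x') + Rabs (y - y')).
Proof.
  intros HK [_ Hx] [_ Hy] [_ Hx'] [_ Hy'] Hd'.
  assert (HxK : a <> b -> x' <= K) by (intros Hab; rewrite dJ_other_branch in Hd' by exact Hab; lra).
  eapply Rle_trans; [apply (G_grad_lipschitz a b x y x' y' K); auto; lra|].
  apply Rmult_le_compat_r; [pose proof (Rabs_pos (x - x')); pose proof (Rabs_pos (y - y')); lra|].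
  pose proof lam_ge_gamma.
  assert ((6 + 2 * K) / lam <= (6 + 2 * K) / gamma)
    by (apply Rmult_le_compat_l; [lra|apply Rinv_le_contravar; lra]).
  unfold C11_constant. rewrite Rabs_right by lra. unfold Rdiv in *. lra.
Qed.

Lemma G_nonneg N a x b y : inJ N a x -> inJ N b y -> 0 <= G a x b y.
Proof.
  intros [_ Hx] [_ Hy]. pose proof lam_pos.
  unfold G, branchwise. destruct (Nat.eq_dec a b); apply Rmult_le_pos; try lra.
  - apply G_same_nonneg; apply div_lam_nonneg; auto.
  - apply G_cross_nonneg; apply div_lam_nonneg; auto.
Qed.

Lemma G_origin a b : G a 0 b 0 = 0.
Proof.
  unfold G, branchwise. rewrite Rdiv_0_l. destruct (Nat.eq_dec a b).
  - rewrite G_same_origin. ring.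
  - rewrite G_cross_origin. ring.
Qed.

Lemma G_diag N a x : inJ N a x -> 0 <= G a x a x <= gamma.
Proof.
  intros [_ Hx]. pose proof lam_pos. unfold G, branchwise. destruct (Nat.eq_dec a a); [|contradiction].
  pose proof (G_same_diag (x / lam) (div_lam_nonneg x Hx)). pose proof lam_bump_height.
  split; [nra|].
  assert (lam * G_same (x / lam) (x / lam) <= lam * bump_height) by (apply Rmult_le_compat_l; lra). lra.
Qed.

Lemma G_superlinear N : exists g : R -> R,
  (forall s t, 0 <= s -> s <= t -> g s <= g t) /\
  (forall a x b y, inJ N a x -> inJ N b y -> g (dJ a x b y) <= G a x b y) /\
  (forall M, exists R0, forall s, R0 <= s -> 0 < s -> M <= g s / s).
Proof.
  pose proof lam_pos. pose proof lam_bump_height.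
  exists (fun s => lam * stair_primitive (s / lam) - gamma). split; [|split].
  - intros s t Hs Hst. assert (stair_primitive (s / lam) <= stair_primitive (t / lam)).
    { apply stair_primitive_mono. unfold Rdiv; apply Rmult_le_compat_r; [left; apply Rinv_0_lt_compat|]; lra. }
    nra.
  - intros a x b y [_ Hx] [_ Hy]. rewrite <- dJ_rescale by lra.
    pose proof (div_lam_nonneg x Hx). pose proof (div_lam_nonneg y Hy).
    unfold G, branchwise. destruct (Nat.eq_dec a b) as [<-|Hab].
    + rewrite dJ_same_branch. pose proof (G_same_lower (x / lam) (y / lam) ltac:(lra) ltac:(lra)). nra.
    + rewrite dJ_other_branch by exact Hab.
      pose proof (G_cross_lower (x / lam) (y / lam) ltac:(lra) ltac:(lra)). nra.
  - intros M. destruct (stair_primitive_superlinear (M + 1)) as [R1 HR1].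
    exists (Rmax (lam * R1) gamma). intros s Hs Hs0.
    pose proof (Rmax_l (lam * R1) gamma). pose proof (Rmax_r (lam * R1) gamma).
    assert (HR : R1 <= s / lam).
    { apply Rmult_le_reg_r with lam; auto. unfold Rdiv; rewrite Rmult_assoc, Rinv_l by lra. lra. }
    specialize (HR1 _ HR).
    assert (H4 : lam * ((M + 1) * (s / lam)) <= lam * stair_primitive (s / lam)) by (apply Rmult_le_compat_l; lra).
    replace (lam * ((M + 1) * (s / lam))) with ((M + 1) * s) in H4 by (field; lra).
    apply Rmult_le_reg_r with s; auto. unfold Rdiv. rewrite Rmult_assoc, Rinv_l by lra. nra.
Qed.

Lemma G_grad_bound N K : 0 <= K -> exists C, forall a x b y, inJ N a x -> inJ N b y ->
  dJ a x b y <= K -> Rabs (Gx a x b y) + Rabs (Gy a x b y) <= C.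
Proof.
  intros HK. pose proof lam_pos. pose proof lam_ge_1.
  assert (Hpw : 0 < p / w) by (apply Rdiv_lt_0_compat; lra).
  exists (3 * p + 2 * (3 + p / w) * K + (3 * K + p + 2)).
  intros a x b y [_ Hx] [_ Hy] Hd.
  assert (Hd' : dJ a (x / lam) b (y / lam) <= K).
  { rewrite dJ_rescale by lra. apply Rmult_le_reg_r with lam; auto.
    unfold Rdiv; rewrite Rmult_assoc, Rinv_l by lra. pose proof (dJ_rescale lam a x b y). nra. }
  assert (0 <= 3 * p + 2 * (3 + p / w) * K) by nra.
  unfold Gx, Gy, branchwise. destruct (Nat.eq_dec a b) as [<-|Hab].
  - rewrite dJ_same_branch in Hd'.
    pose proof (G_same_grad_bound K (x / lam) (y / lam) (div_lam_nonneg y Hy) Hd'). lra.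
  - rewrite dJ_other_branch in Hd' by exact Hab.
    pose proof (G_cross_grad_bound K (x / lam) (y / lam) (div_lam_nonneg x Hx) (div_lam_nonneg y Hy) Hd').
    lra.
Qed.

Lemma Gy_y_axis a b y : 0 <= y -> Gy a 0 b y = stair (y / lam).
Proof.
  intros Hy. pose proof (div_lam_nonneg y Hy). unfold Gy, branchwise. rewrite Rdiv_0_l.
  destruct (Nat.eq_dec a b); [apply G_same_y_y_axis; auto|apply G_cross_y_y_axis].
Qed.

Lemma Gx_x_axis a b x : 0 <= x -> Gx a x b 0 = dF (x / lam).
Proof.
  intros Hx. pose proof (div_lam_nonneg x Hx). unfold Gx, branchwise. rewrite Rdiv_0_l.
  destruct (Nat.eq_dec a b); [apply G_same_x_x_axis|apply G_cross_x_x_axis; auto].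
Qed.

Section Hamiltonian.

Variables (N : nat) (H : nat -> R -> R) (L : R).
Hypothesis N_pos : (1 <= N)%nat.
Hypothesis H_mono : forall a u v, (a < N)%nat -> 0 <= u <= v -> H a u <= H a v.
Hypothesis L_nonneg : 0 <= L.
Hypothesis H_lipschitz : forall a, (a < N)%nat -> forall u v, Rabs (H a u - H a v) <= L * Rabs (u - v).
Hypothesis slope_dominates : forall a d, (a < N)%nat -> 0 <= d ->
  A0 N H + L * (stair d + 1) <= H a (slope d).

(* Across two branches the momenta are [- G_y in [- (stair + 1), 0]] and [G_x >= slope], so
   Lipschitz continuity bounds the first Hamiltonian by [A0 + L (stair + 1)]. *)
Lemma H_cross_momenta x y a b : 0 <= x -> 0 <= y -> (a < N)%nat -> (b < N)%nat ->
  H b (- G_cross_y x y) <= H a (G_cross_x x y).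
Proof.
  intros Hx Hy Ha Hb.
  pose proof (G_cross_y_bounds x y Hx Hy).
  pose proof (H_lipschitz b Hb (- G_cross_y x y) 0) as Hlip.
  rewrite Rminus_0_r, Rabs_Ropp, (Rabs_right (G_cross_y x y)) in Hlip by lra.
  pose proof (H0_le_A0 N H b Hb).
  pose proof (slope_dominates a (x + y) Ha ltac:(lra)).
  assert (L * G_cross_y x y <= L * (stair (x + y) + 1)) by (apply Rmult_le_compat_l; lra).
  pose proof (G_cross_x_ge x y Hx Hy).
  pose proof (H_mono a (slope (x + y)) (G_cross_x x y) Ha ltac:(pose proof (slope_ge (x + y)); lra)).
  pose proof (Rle_abs (H b (- G_cross_y x y) - H b 0)). lra.
Qed.

Lemma A0_le_H_dF a s : (a < N)%nat -> 0 <= s -> A0 N H <= H a (dF s).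
Proof.
  intros Ha Hs. pose proof (slope_dominates a s Ha Hs). pose proof (stair_nonneg s).
  pose proof (H_mono a (slope s) (dF s) Ha ltac:(pose proof (slope_ge s Hs); pose proof (slope_le_dF s Hs); lra)).
  nra.
Qed.

Lemma Hminus_le_A0 c u : (c < N)%nat -> 0 <= u -> Hminus (H c) u <= A0 N H.
Proof.
  intros Hc Hu. unfold Hminus. rewrite Rmin_right by lra. apply H0_le_A0, Hc.
Qed.

Lemma hamiltonian_ineq_origin a b : (a < N)%nat ->
  FA N H (A0 N H + gamma) (fun c => - Gy a 0 c 0) <= FA N H (A0 N H + gamma) (fun c => Gx c 0 b 0).
Proof.
  intros Ha. eapply Rle_trans; [|apply FA_ge_flux]. apply FA_lub; [exact N_pos|lra|].
  intros c Hc. rewrite Gy_y_axis, Rdiv_0_l, stair_below by lra.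
  pose proof (Hminus_le_A0 c (- 0) Hc ltac:(lra)). lra.
Qed.

Lemma hamiltonian_ineq_x_axis a x b : (a < N)%nat -> 0 < x ->
  FA N H (A0 N H + gamma) (fun c => - Gy a x c 0) <= H a (Gx a x b 0) + gamma.
Proof.
  intros Ha Hx. pose proof (div_lam_nonneg x ltac:(lra)) as HX.
  rewrite Gx_x_axis by lra. pose proof (A0_le_H_dF a (x / lam) Ha HX).
  apply FA_lub; [exact N_pos|lra|]. intros c Hc. unfold Gy, branchwise. rewrite Rdiv_0_l.
  destruct (Nat.eq_dec a c) as [<-|Hac].
  - pose proof (Hminus_le_A0 a _ Ha (G_same_y_x_axis_nonpos (x / lam) HX)). lra.
  - pose proof (G_cross_y_bounds (x / lam) 0 HX ltac:(lra)).
    unfold Hminus. rewrite Rmin_left by lra.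
    pose proof (H_cross_momenta (x / lam) 0 a c HX ltac:(lra) Ha Hc).
    rewrite G_cross_x_x_axis in * by exact HX. lra.
Qed.

Lemma hamiltonian_ineq_y_axis a b y : (b < N)%nat -> 0 <= y ->
  H b (- Gy a 0 b y) <= FA N H (A0 N H + gamma) (fun c => Gx c 0 b y).
Proof.
  intros Hb Hy. rewrite Gy_y_axis by exact Hy.
  eapply Rle_trans; [|apply (FA_ge_Hminus _ _ _ _ b Hb)]. cbv beta.
  unfold Hminus, Gx, branchwise. destruct (Nat.eq_dec b b) as [_|]; [|contradiction].
  rewrite Rdiv_0_l, G_same_x_y_axis_neg_part by (apply div_lam_nonneg; exact Hy). lra.
Qed.

Lemma hamiltonian_ineq_off_vertex a x b y : (a < N)%nat -> (b < N)%nat -> 0 <= x -> 0 <= y ->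
  H b (- Gy a x b y) <= H a (Gx a x b y).
Proof.
  intros Ha Hb Hx Hy. pose proof (div_lam_nonneg x Hx). pose proof (div_lam_nonneg y Hy).
  unfold Gx, Gy, branchwise. destruct (Nat.eq_dec a b) as [<-|Hab].
  - destruct (G_same_momenta_ordered (x / lam) (y / lam)) as [E|Hord]; try assumption.
    + rewrite E. lra.
    + apply H_mono; assumption.
  - apply H_cross_momenta; auto.
Qed.

Lemma G_hamiltonian_ineq a x b y : inJ N a x -> inJ N b y ->
  Hbold N H (A0 N H + gamma) b y (fun c => - Gy a x c y)
  - Hbold N H (A0 N H + gamma) a x (fun c => Gx c x b y) <= gamma.
Proof.
  intros [Ha Hx] [Hb Hy].
  destruct (Req_dec y 0) as [->|Hy0]; destruct (Req_dec x 0) as [->|Hx0].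
  - rewrite !Hbold_vertex. pose proof (hamiltonian_ineq_origin a b Ha). lra.
  - rewrite Hbold_vertex, Hbold_off_vertex by exact Hx0.
    pose proof (hamiltonian_ineq_x_axis a x b Ha ltac:(lra)). lra.
  - rewrite Hbold_off_vertex, Hbold_vertex by exact Hy0.
    pose proof (hamiltonian_ineq_y_axis a b y Hb Hy). lra.
  - rewrite !Hbold_off_vertex by assumption.
    pose proof (hamiltonian_ineq_off_vertex a x b y Ha Hb Hx Hy). lra.
Qed.

End Hamiltonian.

End Rescaled.
End Profile.
End Staircase.

Fixpoint nodes (d0 : R) (f : nat -> R) (k : nat) : R :=
  match k with
  | O => Rmax d0 (f O)
  | S k => Rmax (nodes d0 f k + 1) (f (S k))
  end.

Lemma nodes_step d0 f k : nodes d0 f k + 1 <= nodes d0 f (S k).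
Proof. apply Rmax_l. Qed.

Lemma nodes_ge d0 f k : f k <= nodes d0 f k.
Proof. destruct k; apply Rmax_r. Qed.

Lemma nodes_ge_start d0 f : d0 <= nodes d0 f 0.
Proof. apply Rmax_l. Qed.

Section Design.

Variables (N : nat) (H : nat -> R -> R) (L : R) (Rad : R -> R).
Hypothesis L_nonneg : 0 <= L.
Hypothesis Rad_spec : forall m a u, (a < N)%nat -> Rad m <= u -> m <= H a u.

(* [p] makes the Hamiltonians exceed [A0 + L] below the first node; beyond the [n]-th node the
   logarithmic part of [slope] exceeds the coercivity radius of [A0 + L (n + 2)], while the
   staircase has only climbed to [n + 1]. *)
Definition design_p := Rmax 1 (Rad (A0 N H + L)).
Definition design_nodes := nodes (/ design_p) (fun k => exp (Rad (A0 N H + L * (INR k + 2)))).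

Lemma design_p_pos : 0 < design_p.
Proof. pose proof (Rmax_l 1 (Rad (A0 N H + L))). unfold design_p; lra. Qed.

Lemma design_nodes_start : / design_p <= design_nodes 0.
Proof. apply nodes_ge_start. Qed.

Lemma design_nodes_nonneg : 0 <= design_nodes 0.
Proof. pose proof design_nodes_start. pose proof (Rinv_0_lt_compat _ design_p_pos). lra. Qed.

Lemma design_nodes_step k : design_nodes k + 1 <= design_nodes (S k).
Proof. apply nodes_step. Qed.

Lemma design_slope_dominates a d : (a < N)%nat -> 0 <= d ->
  A0 N H + L * (stair design_nodes d + 1) <= H a (slope design_p d).
Proof.
  intros Ha Hd. pose proof design_p_pos as Hp.
  assert (Hbelow : forall d, 0 <= d <= design_nodes 0 -> A0 N H + L * (stair design_nodes d + 1) <= H a (slope design_p d)).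
  { intros d0 [Hd0 Hd0']. rewrite (stair_below design_nodes design_nodes_step) by lra.
    replace (L * (0 + 1)) with L by ring. apply Rad_spec; [exact Ha|]. pose proof (slope_ge design_p d0 Hd0). pose proof (Rmax_r 1 (Rad (A0 N H + L))).
    unfold design_p in *. lra. }
  enough (Hn : forall n d, 0 <= d <= design_nodes n ->
    A0 N H + L * (stair design_nodes d + 1) <= H a (slope design_p d)).
  { apply (Hn (nat_bound d)). pose proof (nat_bound_ge d).
    pose proof (dk_ge_INR design_nodes design_nodes_nonneg design_nodes_step (nat_bound d)). lra. }
  induction n as [|n IHn]; intros d0 [Hd0 Hd0']; [apply Hbelow; lra|].
  destruct (Rle_dec d0 (design_nodes n)) as [Hle|Hlt]; [apply IHn; lra|].
  pose proof (stair_le_index design_nodes design_nodes_step (S n) d0 Hd0') as Hstair.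
  set (R0 := Rad (A0 N H + L * (INR n + 2))).
  assert (HR0 : R0 <= slope design_p d0).
  { pose proof (nodes_ge (/ design_p) (fun k => exp (Rad (A0 N H + L * (INR k + 2)))) n) as Hnode.
    fold design_nodes in Hnode. rewrite slope_eq by lra.
    pose proof (ln_le_compat (exp R0) (1 + d0) (exp_pos R0) ltac:(unfold R0 in *; lra)).
    rewrite ln_exp in *. lra. }
  pose proof (Rad_spec _ a _ Ha HR0). rewrite S_INR in Hstair.
  assert (L * (stair design_nodes d0 + 1) <= L * (INR n + 2)) by (apply Rmult_le_compat_l; lra).
  lra.
Qed.

End Design.

Lemma rescaling_width gamma p : 0 < gamma -> 0 < p ->
  0 < gamma / (lam gamma * p) /\ gamma / (lam gamma * p) <= / p /\
  lam gamma * p * (gamma / (lam gamma * p)) = gamma.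
Proof.
  intros Hg Hp. pose proof (lam_ge_1 gamma). pose proof (lam_ge_gamma gamma).
  split; [apply Rdiv_lt_0_compat; nra|split; [|field; nra]].
  apply Rmult_le_reg_r with (lam gamma * p); [nra|].
  replace (gamma / (lam gamma * p) * (lam gamma * p)) with gamma by (field; nra).
  replace (/ p * (lam gamma * p)) with (lam gamma) by (field; lra). lra.
Qed.

Theorem proposition5p1 (N : nat) (H : nat -> R -> R) :
  (1 <= N)%nat ->
  (forall a, (a < N)%nat ->
     lipschitz (H a) /\ coercive (H a) /\ quasi_convex (H a) /\
     (forall p, H a 0 <= H a p)) ->
  exists CK : R -> R,
  forall gamma : R, 0 < gamma ->
  exists (G Gx Gy : nat -> R -> nat -> R -> R),
    (* (i) *)
    cont_J2 N G /\
    (forall a x b y, inJ N a x -> inJ N b y ->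
       branch_deriv (fun s => G a s b y) x (Gx a x b y) /\
       branch_deriv (fun t => G a x b t) y (Gy a x b y)) /\
    (forall a b y, (a < N)%nat -> inJ N b y -> cont_half (fun s => Gx a s b y)) /\
    (forall a x b, inJ N a x -> (b < N)%nat -> cont_half (fun t => Gy a x b t)) /\
    (* (ii) *)
    (forall a x b y, inJ N a x -> inJ N b y -> 0 <= G a x b y) /\
    (forall a b, (a < N)%nat -> (b < N)%nat -> G a 0 b 0 = 0) /\
    (* (iii) *)
    (forall a x, inJ N a x -> 0 <= G a x a x <= gamma) /\
    (* (iv) *)
    (forall a x b y, inJ N a x -> inJ N b y ->
       Hbold N H (A0 N H + gamma) b y (fun c => - Gy a x c y)
       - Hbold N H (A0 N H + gamma) a x (fun c => Gx c x b y) <= gamma) /\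
    (* (v) *)
    (exists g : R -> R,
       (forall s t, 0 <= s -> s <= t -> g s <= g t) /\
       (forall a x b y, inJ N a x -> inJ N b y -> g (dJ a x b y) <= G a x b y) /\
       (forall M, exists R0, forall s, R0 <= s -> 0 < s -> M <= g s / s)) /\
    (* (vi) *)
    (forall K, 0 <= K -> exists C, forall a x b y, inJ N a x -> inJ N b y ->
       dJ a x b y <= K -> Rabs (Gx a x b y) + Rabs (Gy a x b y) <= C) /\
    (* C^{1,1} on each piece (J_a x J_b) /\ J_K^2 with ||D^2 G|| <= C_K / gamma *)
    (forall K, 0 < K -> forall a b x y x' y',
       inJ N a x -> inJ N b y -> inJ N a x' -> inJ N b y' ->
       dJ a x b y <= K -> dJ a x' b y' <= K ->
       Rabs (Gx a x b y - Gx a x' b y') + Rabs (Gy a x b y - Gy a x' b y')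
         <= CK K / gamma * (Rabs (x - x') + Rabs (y - y'))).
Proof.
  intros HN Hyp.
  destruct (uniform_lipschitz H N (fun a Ha => proj1 (Hyp a Ha))) as (L & HL0 & HL).
  destruct (coercivity_radius H N (fun a Ha => proj1 (proj2 (Hyp a Ha)))) as (Rad & HRad).
  assert (Hmono : forall a u v, (a < N)%nat -> 0 <= u <= v -> H a u <= H a v).
  { intros a u v Ha. destruct (Hyp a Ha) as (_ & _ & Hq & Hmin). apply quasi_convex_nondecreasing; auto. }
  set (p := design_p N H L Rad). set (dk := design_nodes N H L Rad).
  pose proof (design_p_pos N H L Rad) as Hp. pose proof (design_nodes_start N H L Rad) as Hdk0.
  pose proof (design_nodes_nonneg N H L Rad) as Hdk0'. pose proof (design_nodes_step N H L Rad) as Hstep.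
  pose proof (design_slope_dominates N H L Rad HL0 HRad) as Hdom.
  fold p dk in Hp, Hdk0, Hdk0', Hstep, Hdom.
  exists (C11_constant p). intros gamma Hg.
  set (w := gamma / (lam gamma * p)).
  destruct (rescaling_width gamma p Hg Hp) as (Hw & Hwp & Hwspec). fold w in Hw, Hwp, Hwspec.
  assert (Hwdk : w <= dk 0%nat) by lra.
  exists (G dk p w gamma), (Gx dk p w gamma), (Gy dk p w gamma).
  split; [eapply G_continuous; solve [eauto]|].
  split; [intros; eapply G_branch_deriv; solve [eauto]|].
  split; [intros a b y _ [_ Hy]; eapply Gx_continuous_half; solve [eauto]|].
  split; [intros a x b [_ Hx] _; eapply Gy_continuous_half; solve [eauto]|].
  split; [intros; eapply G_nonneg; solve [eauto]|].
  split; [intros; eapply G_origin; solve [eauto]|].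
  split; [intros; eapply G_diag; solve [eauto]|].
  split; [intros; eapply G_hamiltonian_ineq with (L := L); solve [eauto]|].
  split; [eapply G_superlinear; solve [eauto]|].
  split; [intros; eapply G_grad_bound; solve [eauto]|].
  intros; eapply G_C11; solve [eauto].
Qed.
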